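(* (i) There is an absolute constant $C$ such that for all integers $m\ge 1$ and all reals $2\le y\le z$, $$\left|\sum_{y\le q\le z}\frac{\Lambda(q)}{q\log^2(mq)}-\left(\frac{1}{\log(my)}-\frac{1}{\log(mz)}\right)\right|\le\frac{C}{\log^2(my)},$$ and consequently, for all integers $m\ge1$ and reals $y\ge 2$, $$\left|\sum_{q\ge y}\frac{\Lambda(q)}{q\log^2(mq)}-\frac{1}{\log(my)}\right|\le\frac{C}{\log^2(my)}.$$ (ii) If $m\ge1$ is an integer with $m=2^x$ for some real $x\ge 1$, then $$\log m\cdot\sum_{q}\frac{\Lambda(q)}{q\log^2(mq)}\le\sum_{j\ge1}\frac{x}{(x+j)^2}\le\frac{x}{x+\frac12}\le 1.$$ (iii) For every integer $m\ge1$, $$\sum_{q}\frac{\Lambda(q)}{q\log(mq)\log(2mq)}\le\frac{1}{\log(2m)}.$$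
   Context: Sums are over natural numbers $q$ (effectively over prime powers $q\ge2$). $\Lambda$ is the von Mangoldt function: $\Lambda(q)=\log p$ if $q=p^j$ for a prime $p$ and $j\ge 1$, and $\Lambda(q)=0$ otherwise. *)

From Stdlib Require Import Reals ZArith Znumtheory Classical ClassicalEpsilon.
From Coquelicot Require Import Coquelicot.
Open Scope R_scope.

Definition prime_nat (p : nat) : Prop := Znumtheory.prime (Z.of_nat p).

Definition prime_power_of (q p : nat) : Prop :=
  prime_nat p /\ exists j : nat, (1 <= j)%nat /\ q = Nat.pow p j.

Definition vonMangoldt (q : nat) : R :=
  match excluded_middle_informative (exists p, prime_power_of q p) with
  | left H => ln (INR (proj1_sig (constructive_indefinite_description _ H)))
  | right _ => 0
  end.

Definition term (m q : nat) : R :=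
  vonMangoldt q / (INR q * (ln (INR m * INR q)) ^ 2).

(* sum over natural numbers q with y <= q <= z of f q
   (terms with q > up z are all outside the range since up z > z) *)
Definition sum_between (f : nat -> R) (y z : R) : R :=
  sum_n (fun q => if Rle_dec y (INR q) then
                    if Rle_dec (INR q) z then f q else 0 else 0)
        (Z.to_nat (up z)).

Definition from_y (f : nat -> R) (y : R) : nat -> R :=
  fun q => if Rle_dec y (INR q) then f q else 0.

(** (i) Legendre's identity [ln N! = sum_(d <= N) Lambda(d) floor(N/d)] together with
    the middle binomial coefficient give Chebyshev's bound [psi(N) <= 4 ln 2 N] and
    Mertens' estimate [sum_(q <= n) Lambda(q)/q = ln n + O(1)].  Hence
    [Lambda(q)/q = (ln (q+1) - ln q) + b_q] where the partial sums of [b_q] are bounded;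
    Abel summation of [b_q] against the decreasing weight [1/ln^2(mq)] costs
    [O(1/ln^2(my))], while the smooth part telescopes to [1/ln(my) - 1/ln(mz)].

    (ii), (iii) For [s = 1 + u > 1] one has
    [-zeta'/zeta(s) = sum_q Lambda(q) q^-s <= ln 2 * 2^-u / (1 - 2^-u)]:
    since [n^-s ln n] decreases for [n >= 3] and [3^-s ln 3 + 5^-s ln 5 <= 2^-s ln 2 + 4^-s ln 4],
    [-zeta'(s)] is at most twice its even part [2^-s (ln 2 zeta(s) - zeta'(s))].
    Writing [1/c^2 = int_0^oo u e^-cu du] and
    [1/(c (c + ln 2)) = (1/ln 2) int_0^oo (1 - 2^-u) e^-cu du] with [c = ln (mq)], and
    summing under the integral, the Dirichlet series bound turns the sums of (ii) and
    (iii) into [sum_(j >= 1) ln 2 / (ln m + j ln 2)^2] and [1/ln(2m)] respectively. *)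

From Stdlib Require Import Reals.
From Coquelicot Require Import Coquelicot.
From Stdlib Require Import ZArith Znumtheory Zpow_facts Lia Lra Classical ClassicalEpsilon.
Open Scope R_scope.

Lemma divide_nat_Z (a b : nat) :
  Nat.divide a b <-> Z.divide (Z.of_nat a) (Z.of_nat b).
Proof.
  split.
  - intros [k ->]. exists (Z.of_nat k). lia.
  - intros [z Hz]. destruct (Nat.eq_dec a 0) as [->|Ha].
    + exists 0%nat. lia.
    + assert (0 <= z)%Z by nia. exists (Z.to_nat z). nia.
Qed.

Lemma prime_nat_ge_2 p : prime_nat p -> (2 <= p)%nat.
Proof. intros H%prime_ge_2. lia. Qed.

Lemma prime_nat_divide_mul p a b :
  prime_nat p -> Nat.divide p (a * b) -> Nat.divide p a \/ Nat.divide p b.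
Proof.
  intros Hp Hd%divide_nat_Z. rewrite Nat2Z.inj_mul in Hd.
  destruct (prime_mult _ Hp _ _ Hd); [left | right]; apply divide_nat_Z; auto.
Qed.

Lemma prime_nat_divide_pow p a k :
  prime_nat p -> (1 <= k)%nat -> Nat.divide p (a ^ k) -> Nat.divide p a.
Proof.
  intros Hp. induction k as [|k IH]; intros Hk Hd; [lia|].
  destruct (prime_nat_divide_mul _ _ _ Hp Hd) as [H|H]; auto.
  destruct k as [|k].
  - apply Nat.divide_1_r in H. apply prime_nat_ge_2 in Hp. lia.
  - apply IH; auto; lia.
Qed.

Lemma prime_nat_divide_prime p q :
  prime_nat p -> prime_nat q -> Nat.divide p q -> p = q.
Proof.
  intros Hp Hq Hd%divide_nat_Z. apply (prime_div_prime _ _ Hp Hq) in Hd. lia.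
Qed.

Lemma prime_pow_inj_base p j q k :
  prime_nat p -> prime_nat q -> (1 <= j)%nat -> (1 <= k)%nat ->
  (p ^ j = q ^ k)%nat -> p = q.
Proof.
  intros Hp Hq Hj Hk E. apply prime_nat_divide_prime; auto.
  apply (prime_nat_divide_pow _ _ k Hp Hk). rewrite <- E.
  exists (p ^ (j - 1))%nat. rewrite Nat.mul_comm, <- Nat.pow_succ_r'. f_equal. lia.
Qed.

Lemma vonMangoldt_prime_pow p j :
  prime_nat p -> (1 <= j)%nat -> vonMangoldt (p ^ j)%nat = ln (INR p).
Proof.
  intros Hp Hj. unfold vonMangoldt.
  destruct excluded_middle_informative as [H|H].
  - destruct constructive_indefinite_description as [q [Hq [k [Hk E]]]]. simpl.
    do 2 f_equal. symmetry. exact (prime_pow_inj_base p j q k Hp Hq Hj Hk E).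
  - exfalso. apply H. exists p. split; eauto.
Qed.

Lemma vonMangoldt_cases q :
  vonMangoldt q = 0 \/
  exists p j, prime_nat p /\ (1 <= j)%nat /\ q = (p ^ j)%nat /\
              vonMangoldt q = ln (INR p).
Proof.
  destruct (classic (exists p, prime_power_of q p)) as [[p [Hp [j [Hj ->]]]]|H].
  - right. exists p, j. do 3 (split; [auto|]). apply vonMangoldt_prime_pow; auto.
  - left. unfold vonMangoldt. destruct excluded_middle_informative; tauto.
Qed.

Lemma vonMangoldt_ge_0 q : 0 <= vonMangoldt q.
Proof.
  destruct (vonMangoldt_cases q) as [->|[p [j [Hp [_ [_ ->]]]]]]; [lra|].
  apply prime_nat_ge_2, le_INR in Hp. rewrite <- ln_1. apply ln_le; simpl in *; lra.
Qed.

Lemma vonMangoldt_small q : (q <= 1)%nat -> vonMangoldt q = 0.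
Proof.
  intros Hq. destruct (vonMangoldt_cases q) as [H|[p [j [Hp [Hj [E _]]]]]]; auto.
  apply prime_nat_ge_2 in Hp. exfalso.
  assert (p ^ 1 <= p ^ j)%nat by (apply Nat.pow_le_mono_r; lia).
  rewrite Nat.pow_1_r in H. lia.
Qed.

Lemma vonMangoldt_0 : vonMangoldt 0 = 0.
Proof. apply vonMangoldt_small. lia. Qed.

Definition divb (d n : nat) : bool := Nat.eqb (n mod d) 0.

Lemma divb_spec d n : divb d n = true <-> Nat.divide d n.
Proof. unfold divb. rewrite Nat.eqb_eq. apply Nat.Lcm0.mod_divide. Qed.

Lemma sum_n_Sn (u : nat -> R) N : sum_n u (S N) = sum_n u N + u (S N).
Proof. rewrite sum_Sn. reflexivity. Qed.

(* Unlike [sum_n_ext], the pointwise goal is an equation in [R], so [ring] and [field] apply. *)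
Lemma sum_n_ext_R (u v : nat -> R) N : (forall k, u k = v k) -> sum_n u N = sum_n v N.
Proof. apply sum_n_ext. Qed.

Lemma sum_n_Rplus (u v : nat -> R) N :
  sum_n (fun k => u k + v k) N = sum_n u N + sum_n v N.
Proof. apply (sum_n_plus (G := R_AbelianMonoid)). Qed.

Lemma sum_n_Rmult_l (a : R) (u : nat -> R) N :
  sum_n (fun k => a * u k) N = a * sum_n u N.
Proof. apply (sum_n_mult_l (K := R_Ring)). Qed.

Lemma sum_n_Rmult_r (a : R) (u : nat -> R) N :
  sum_n (fun k => u k * a) N = sum_n u N * a.
Proof. apply (sum_n_mult_r (K := R_Ring)). Qed.

Lemma sum_n_Rminus (u v : nat -> R) N :
  sum_n (fun k => u k - v k) N = sum_n u N - sum_n v N.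
Proof.
  induction N as [|N IH]; [rewrite !sum_O; auto|].
  rewrite !sum_n_Sn, IH. lra.
Qed.

Lemma sum_n_Rle (u v : nat -> R) N :
  (forall k, (k <= N)%nat -> u k <= v k) -> sum_n u N <= sum_n v N.
Proof.
  intros H. induction N as [|N IH]; [rewrite !sum_O; auto|].
  rewrite !sum_n_Sn. apply Rplus_le_compat; auto.
Qed.

Lemma sum_n_zero (u : nat -> R) N :
  (forall k, (k <= N)%nat -> u k = 0) -> sum_n u N = 0.
Proof.
  intros H. induction N as [|N IH]; [rewrite sum_O; auto|].
  rewrite sum_n_Sn, IH, H; auto. lra.
Qed.

Lemma sum_n_nonneg (u : nat -> R) N :
  (forall k, (k <= N)%nat -> 0 <= u k) -> 0 <= sum_n u N.
Proof.
  intros H. rewrite <- (sum_n_zero (fun _ => 0) N) by auto. apply sum_n_Rle. auto.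
Qed.

Lemma sum_n_delta (d0 N : nat) (c : R) : (d0 <= N)%nat ->
  sum_n (fun d => if Nat.eq_dec d d0 then c else 0) N = c.
Proof.
  induction N as [|N IH]; intros H.
  - rewrite sum_O. replace d0 with 0%nat by lia. destruct Nat.eq_dec; congruence.
  - rewrite sum_n_Sn. destruct (Nat.eq_dec (S N) d0) as [<-|E].
    + rewrite sum_n_zero; [lra|]. intros k Hk. destruct Nat.eq_dec; [lia|auto].
    + rewrite IH by lia. lra.
Qed.

Lemma sum_n_ge_term (u : nat -> R) i N :
  (i <= N)%nat -> (forall k, (k <= N)%nat -> 0 <= u k) -> u i <= sum_n u N.
Proof.
  intros Hi H. induction N as [|N IH].
  - replace i with 0%nat by lia. rewrite sum_O. lra.
  - rewrite sum_n_Sn. destruct (Nat.eq_dec i (S N)) as [->|E].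
    + assert (0 <= sum_n u N) by (apply sum_n_nonneg; auto). lra.
    + assert (u i <= sum_n u N) by (apply IH; auto; lia).
      assert (0 <= u (S N)) by auto. lra.
Qed.

Lemma sum_n_le_upper (u : nat -> R) a b :
  (a <= b)%nat -> (forall k, 0 <= u k) -> sum_n u a <= sum_n u b.
Proof.
  intros H Hu. induction H as [|b H IH]; [lra|].
  rewrite sum_n_Sn. specialize (Hu (S b)). lra.
Qed.

Lemma sum_n_trailing_zeros (u : nat -> R) a N : (a <= N)%nat ->
  (forall k, (a < k <= N)%nat -> u k = 0) -> sum_n u N = sum_n u a.
Proof.
  intros H Hz. induction H as [|N H IH]; auto.
  rewrite sum_n_Sn, Hz by lia. rewrite IH by (intros k Hk; apply Hz; lia). lra.
Qed.

Lemma sum_n_diff_ext (u v : nat -> R) a b : (a <= b)%nat ->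
  (forall k, (a < k <= b)%nat -> u k = v k) ->
  sum_n u b - sum_n u a = sum_n v b - sum_n v a.
Proof.
  intros H. induction H as [|b H IH]; intros Huv; [lra|].
  rewrite !sum_n_Sn, Huv by lia.
  assert (sum_n u b - sum_n u a = sum_n v b - sum_n v a) by (apply IH; intros; apply Huv; lia).
  lra.
Qed.

Lemma sum_n_switch_R (u : nat -> nat -> R) m n :
  sum_n (fun i => sum_n (u i) n) m = sum_n (fun j => sum_n (fun i => u i j) m) n.
Proof. apply (sum_n_switch (G := R_AbelianMonoid)). Qed.

(** * Divisor sums, Legendre's identity, Chebyshev and Mertens *)

Lemma pow_divide_pow p a b : (a <= b)%nat -> Nat.divide (p ^ a) (p ^ b).
Proof. intros H. exists (p ^ (b - a))%nat. rewrite <- Nat.pow_add_r. f_equal. lia. Qed.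

Lemma valuation_exists p k : (2 <= p)%nat -> (1 <= k)%nat ->
  exists v, Nat.divide (p ^ v) k /\ ~ Nat.divide (p ^ S v) k.
Proof.
  intros Hp. induction k as [k IH] using (well_founded_induction lt_wf). intros Hk.
  destruct (Nat.eq_dec (k mod p) 0) as [H|H].
  - apply Nat.Lcm0.mod_divide in H as [k' ->].
    destruct (IH k') as [v [H1 H2]]; [nia|nia|].
    exists (S v). rewrite !Nat.pow_succ_r', (Nat.mul_comm k' p). split.
    + apply Nat.mul_divide_mono_l. auto.
    + intros H3%Nat.mul_divide_cancel_l; [auto|lia].
  - exists 0%nat. split; [apply Nat.divide_1_l|].
    rewrite Nat.pow_1_r. intros H3%Nat.Lcm0.mod_divide. auto.
Qed.

Lemma prime_divisor_exists n : (2 <= n)%nat -> exists p, prime_nat p /\ Nat.divide p n.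
Proof.
  induction n as [n IH] using (well_founded_induction lt_wf). intros Hn.
  destruct (prime_dec (Z.of_nat n)) as [H|H].
  - exists n. split; auto. apply Nat.divide_refl.
  - destruct (not_prime_divide (Z.of_nat n)) as [m [Hm Hmd]]; [lia|auto|].
    destruct (IH (Z.to_nat m)) as [p [Hp Hpd]]; [lia|lia|].
    exists p. split; auto. apply Nat.divide_trans with (Z.to_nat m); auto.
    apply divide_nat_Z. rewrite Z2Nat.id by lia. auto.
Qed.

(* If [p^v] exactly divides [k], the prime-power divisors of [p k] are those of [k]
   together with [p^(v+1)]. *)
Lemma vonMangoldt_divisor_mul_prime p k v d : prime_nat p ->
  Nat.divide (p ^ v) k -> ~ Nat.divide (p ^ S v) k ->
  (if divb d (p * k) then vonMangoldt d else 0) =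
  (if divb d k then vonMangoldt d else 0) +
  (if Nat.eq_dec d (p ^ S v) then ln (INR p) else 0).
Proof.
  intros Hp Hv Hv'. destruct (Nat.eq_dec d (p ^ S v)) as [->|E].
  - assert (divb (p ^ S v) (p * k) = true).
    { apply divb_spec. rewrite Nat.pow_succ_r'. apply Nat.mul_divide_mono_l. auto. }
    assert (divb (p ^ S v) k = false) by (apply Bool.not_true_iff_false; rewrite divb_spec; auto).
    rewrite H, H0, vonMangoldt_prime_pow by (auto; lia). lra.
  - rewrite Rplus_0_r.
    destruct (vonMangoldt_cases d) as [->|[r [j [Hr [Hj [-> ->]]]]]];
      [destruct divb, divb; reflexivity|].
    enough (divb (r ^ j) (p * k) = divb (r ^ j) k) as -> by reflexivity.
    apply Bool.eq_true_iff_eq. rewrite !divb_spec.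
    split; [|apply Nat.divide_mul_r]. intros Hd.
    destruct (Nat.eq_dec r p) as [->|Erp].
    + destruct j as [|j]; [lia|]. rewrite Nat.pow_succ_r' in Hd.
      apply Nat.mul_divide_cancel_l in Hd; [|apply prime_nat_ge_2 in Hp; lia].
      destruct (le_lt_dec (S j) v) as [Hjv|Hjv].
      * eapply Nat.divide_trans; [apply pow_divide_pow, Hjv|auto].
      * destruct (Nat.eq_dec j v) as [->|Ejv]; [congruence|].
        exfalso. apply Hv'. eapply Nat.divide_trans; [apply pow_divide_pow|exact Hd]. lia.
    + apply divide_nat_Z. apply divide_nat_Z in Hd. rewrite Nat2Z.inj_mul in Hd.
      apply Gauss with (Z.of_nat p); auto.
      rewrite Nat2Z.inj_pow. apply rel_prime_sym, rel_prime_Zpower_r; [lia|].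
      apply prime_rel_prime; auto. intros Hpr%divide_nat_Z.
      apply Erp. symmetry. apply prime_nat_divide_prime; auto.
Qed.

Theorem vonMangoldt_divisor_sum n N : (1 <= n)%nat -> (n <= N)%nat ->
  sum_n (fun d => if divb d n then vonMangoldt d else 0) N = ln (INR n).
Proof.
  induction n as [n IH] using (well_founded_induction lt_wf). intros Hn HN.
  destruct (Nat.eq_dec n 1) as [->|E].
  - simpl INR. rewrite ln_1. apply sum_n_zero. intros d _.
    destruct (divb d 1) eqn:D; auto.
    apply divb_spec, Nat.divide_1_r in D as ->. apply vonMangoldt_small. lia.
  - destruct (prime_divisor_exists n) as [p [Hp [k ->]]]; [lia|].
    pose proof (prime_nat_ge_2 _ Hp).
    destruct (valuation_exists p k) as [v [Hv Hv']]; [lia|nia|].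
    assert (Hpv : (p ^ S v <= p * k)%nat).
    { rewrite Nat.pow_succ_r'. apply Nat.mul_le_mono_l, Nat.divide_pos_le; auto. nia. }
    rewrite Nat.mul_comm.
    rewrite (sum_n_ext _ _ _ (fun d => vonMangoldt_divisor_mul_prime p k v d Hp Hv Hv')).
    rewrite sum_n_Rplus, sum_n_delta, IH by nia.
    rewrite mult_INR, ln_mult; [lra| |]; apply lt_0_INR; nia.
Qed.

Lemma div_S_cases M d : (d <> 0)%nat ->
  (divb d (S M) = true /\ S M = d * S (M / d) /\ S M / d = S (M / d))%nat \/
  (divb d (S M) = false /\ S M / d = M / d)%nat.
Proof.
  intros Hd. pose proof (Nat.div_mod_eq M d). pose proof (Nat.mod_upper_bound M d Hd).
  destruct (Nat.eq_dec (S (M mod d)) d) as [Hr|Hr].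
  - left. assert (S M = d * S (M / d))%nat by nia. split; [|split; auto].
    + apply divb_spec. eexists. rewrite Nat.mul_comm. eauto.
    + symmetry. apply Nat.div_unique with 0%nat; lia.
  - right. split.
    + unfold divb. apply Nat.eqb_neq.
      rewrite <- (Nat.mod_unique (S M) d (M / d) (S (M mod d))); lia.
    + symmetry. apply Nat.div_unique with (S (M mod d)); lia.
Qed.

Lemma sum_n_multiples (g : nat -> R) d M : (d <> 0)%nat ->
  sum_n (fun n => if divb d n then g n else 0) M = sum_n (fun k => g (d * k)%nat) (M / d).
Proof.
  intros Hd. induction M as [|M IH].
  - rewrite Nat.Div0.div_0_l, !sum_O, Nat.mul_0_r.
    replace (divb d 0) with true; [reflexivity|].
    symmetry. apply divb_spec, Nat.divide_0_r.
  - rewrite sum_n_Sn, IH.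
    destruct (div_S_cases M d Hd) as [[-> [E ->]]|[-> ->]]; [|lra].
    rewrite sum_n_Sn, <- E. reflexivity.
Qed.

Theorem sum_mul_ln_dirichlet (g : nat -> R) M : g 0%nat = 0 ->
  sum_n (fun n => g n * ln (INR n)) M =
  sum_n (fun d => vonMangoldt d * sum_n (fun k => g (d * k)%nat) (M / d)) M.
Proof.
  intros Hg0.
  transitivity (sum_n (fun n =>
    sum_n (fun d => g n * (if divb d n then vonMangoldt d else 0)) M) M).
  - apply sum_n_ext_loc. intros n Hn. destruct (Nat.eq_dec n 0) as [->|Hn0].
    + rewrite Hg0, sum_n_zero; [lra|]. intros; lra.
    + rewrite sum_n_Rmult_l, vonMangoldt_divisor_sum by lia. reflexivity.
  - rewrite sum_n_switch_R. apply sum_n_ext_loc. intros d Hd.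
    destruct (Nat.eq_dec d 0) as [->|Hd0].
    + rewrite vonMangoldt_0, sum_n_zero; [lra|]. intros. destruct divb; lra.
    + rewrite <- sum_n_multiples, <- sum_n_Rmult_l by auto.
      apply sum_n_ext. intros n. destruct divb; lra.
Qed.

(* The [n = 0] term is the junk value [ln 0 = 0]. *)
Definition ln_fact (N : nat) : R := sum_n (fun n => ln (INR n)) N.

Definition psi (N : nat) : R := sum_n vonMangoldt N.

Lemma ln_0 : ln 0 = 0.
Proof. unfold ln. case Rlt_dec; intros H; [exfalso; exact (Rlt_irrefl 0 H)|reflexivity]. Qed.

Lemma ln_fact_fact N : ln_fact N = ln (INR (fact N)).
Proof.
  unfold ln_fact. induction N as [|N IH].
  - rewrite sum_O. simpl. rewrite ln_0, ln_1. reflexivity.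
  - rewrite sum_n_Sn, IH, fact_simpl, mult_INR, ln_mult; [lra| |];
      apply lt_0_INR; auto using lt_O_fact with arith.
Qed.

Theorem ln_fact_legendre M :
  ln_fact M = sum_n (fun d => vonMangoldt d * INR (M / d)) M.
Proof.
  pose (g := fun n : nat => if Nat.eq_dec n 0 then 0 else 1).
  transitivity (sum_n (fun n => g n * ln (INR n)) M).
  { apply sum_n_ext. intros n. unfold g.
    destruct Nat.eq_dec as [->|]; simpl; [rewrite ln_0|]; lra. }
  rewrite sum_mul_ln_dirichlet by reflexivity.
  apply sum_n_ext_loc. intros d Hd. destruct (Nat.eq_dec d 0) as [->|Hd0].
  { rewrite vonMangoldt_0. lra. }
  f_equal. induction (M / d)%nat as [|K IH].
  - rewrite sum_O. unfold g. rewrite Nat.mul_0_r. reflexivity.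
  - rewrite sum_n_Sn, IH, S_INR. unfold g. destruct Nat.eq_dec; [lia|lra].
Qed.

Lemma binomial_le_pow2 N a : (a <= N)%nat ->
  INR (fact N) / (INR (fact a) * INR (fact (N - a))) <= 2 ^ N.
Proof.
  intros Ha. replace 2 with (1 + 1) by lra. rewrite binomial, <- sum_n_Reals.
  change (INR (fact N) / (INR (fact a) * INR (fact (N - a)))) with (Binomial.C N a).
  replace (Binomial.C N a) with (Binomial.C N a * 1 ^ a * 1 ^ (N - a)) by (rewrite !pow1; lra).
  apply (sum_n_ge_term (fun i => Binomial.C N i * 1 ^ i * 1 ^ (N - i))); auto.
  intros k _. rewrite !pow1, !Rmult_1_r. apply Rdiv_le_0_compat; [apply pos_INR|].
  apply Rmult_lt_0_compat; apply lt_0_INR, lt_O_fact.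
Qed.

Lemma ln_fact_binomial_le N a : (a <= N)%nat ->
  ln_fact N - ln_fact a - ln_fact (N - a) <= INR N * ln 2.
Proof.
  intros Ha. rewrite !ln_fact_fact.
  pose proof (lt_0_INR _ (lt_O_fact a)). pose proof (lt_0_INR _ (lt_O_fact (N - a))).
  pose proof (lt_0_INR _ (lt_O_fact N)).
  replace (ln (INR (fact N)) - ln (INR (fact a)) - ln (INR (fact (N - a))))
    with (ln (INR (fact N) / (INR (fact a) * INR (fact (N - a))))).
  - rewrite <- ln_pow by lra. apply ln_le; [|apply binomial_le_pow2; auto].
    apply Rdiv_lt_0_compat; nra.
  - unfold Rdiv. rewrite ln_mult, ln_Rinv, ln_mult; try lra; try nra.
    apply Rinv_0_lt_compat. nra.
Qed.

Lemma ln2_pos : 0 < ln 2.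
Proof. rewrite <- ln_1. apply ln_increasing; lra. Qed.

Lemma ln2_lt_1 : ln 2 < 1.
Proof.
  rewrite <- (ln_exp 1). apply ln_increasing; [lra|].
  pose proof (exp_ineq1 1). lra.
Qed.

(* By Legendre's identity, termwise: [floor(N/d) >= floor(a/d) + floor((N-a)/d)], with an
   extra [1] when [N - a < d <= N]. *)
Lemma psi_diff_le N a : (a <= N - a)%nat ->
  psi N - psi (N - a) <= ln_fact N - ln_fact a - ln_fact (N - a).
Proof.
  intros Hab. set (b := (N - a)%nat) in *.
  rewrite !ln_fact_legendre. unfold psi.
  assert (Hext : forall c, (c <= N)%nat ->
    sum_n (fun d => vonMangoldt d * INR (c / d)) c =
    sum_n (fun d => vonMangoldt d * INR (c / d)) N).
  { intros c Hc. symmetry. apply sum_n_trailing_zeros; auto.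
    intros k Hk. rewrite Nat.div_small by lia. simpl. lra. }
  rewrite (Hext a), (Hext b) by lia.
  replace (sum_n vonMangoldt b)
    with (sum_n (fun d => if le_dec d b then vonMangoldt d else 0) N).
  2:{ rewrite (sum_n_trailing_zeros _ b) by (lia || (intros; destruct le_dec; lia || auto)).
      apply sum_n_ext_loc. intros k Hk. destruct le_dec; lia || auto. }
  rewrite <- !sum_n_Rminus. apply sum_n_Rle. intros d Hd.
  destruct (Nat.eq_dec d 0) as [->|Hd0].
  { rewrite vonMangoldt_0. destruct le_dec; lra. }
  pose proof (vonMangoldt_ge_0 d).
  assert (Hc : (a / d + b / d + (if le_dec d b then 0 else 1) <= N / d)%nat).
  { destruct le_dec.
    - rewrite Nat.add_0_r. apply Nat.div_le_lower_bound; auto.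
      pose proof (Nat.Div0.mul_div_le a d). pose proof (Nat.Div0.mul_div_le b d). nia.
    - rewrite (Nat.div_small a d), (Nat.div_small b d) by lia.
      apply Nat.div_le_lower_bound; lia. }
  apply le_INR in Hc. rewrite !plus_INR in Hc.
  destruct le_dec; simpl in Hc; nra.
Qed.

Lemma psi_small N : (N <= 1)%nat -> psi N = 0.
Proof. intros H. apply sum_n_zero. intros k Hk. apply vonMangoldt_small. lia. Qed.

Theorem chebyshev_psi_le N : psi N <= 4 * ln 2 * INR N.
Proof.
  pose proof ln2_pos.
  induction N as [N IH] using (well_founded_induction lt_wf).
  destruct (le_lt_dec N 1) as [HN|HN].
  { rewrite psi_small by auto. pose proof (pos_INR N). nra. }
  set (a := (N / 2)%nat). set (b := (N - a)%nat).
  assert (Hab : (a <= b)%nat) by (pose proof (Nat.Div0.mul_div_le N 2); lia).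
  assert (Hb : (2 * b <= N + 1)%nat).
  { pose proof (Nat.div_mod_eq N 2). pose proof (Nat.mod_upper_bound N 2). lia. }
  pose proof (psi_diff_le N a Hab) as D. pose proof (ln_fact_binomial_le N a ltac:(lia)) as B.
  fold b in D, B.
  assert (IHb := IH b ltac:(lia)).
  apply le_INR in Hb. rewrite mult_INR, plus_INR in Hb. simpl in Hb.
  assert (2 <= INR N) by (apply (le_INR 2); lia).
  nra.
Qed.

Lemma ln_le_sub_1 x : 0 < x -> ln x <= x - 1.
Proof. intros H. pose proof (exp_ineq1_le (ln x)). rewrite exp_ln in *; lra. Qed.

Lemma ln_ge_0 x : 1 <= x -> 0 <= ln x.
Proof. intros H. rewrite <- ln_1. apply ln_le; lra. Qed.

Lemma Rinv_ge_0 x : 0 <= x -> 0 <= / x.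
Proof. intros [H|<-]; [left; apply Rinv_0_lt_compat; auto|rewrite Rinv_0; lra]. Qed.

Lemma INR_ge_1 n : (1 <= n)%nat -> 1 <= INR n.
Proof. intros H. apply (le_INR 1). auto. Qed.

Lemma ln_fact_le n : ln_fact n <= INR n * ln (INR n).
Proof.
  unfold ln_fact. induction n as [|n IH].
  - rewrite sum_O. simpl. rewrite ln_0. lra.
  - rewrite sum_n_Sn. destruct (Nat.eq_dec n 0) as [->|Hn].
    + rewrite sum_O. simpl. rewrite ln_0, ln_1. lra.
    + assert (ln (INR n) <= ln (INR (S n))) by (apply ln_le; [apply lt_0_INR|apply le_INR]; lia).
      pose proof (ln_ge_0 _ (INR_ge_1 n ltac:(lia))). rewrite S_INR in *.
      pose proof (pos_INR n). nra.
Qed.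

Lemma ln_fact_ge n : (1 <= n)%nat -> INR n * ln (INR n) - INR n <= ln_fact n.
Proof.
  unfold ln_fact. induction 1 as [|n Hn IH].
  - rewrite sum_n_Sn, sum_O. simpl. rewrite ln_0, ln_1. lra.
  - rewrite sum_n_Sn. pose proof (INR_ge_1 n Hn).
    assert (INR n * (ln (INR (S n)) - ln (INR n)) <= 1).
    { rewrite <- ln_div by (apply lt_0_INR; lia). rewrite S_INR.
      pose proof (ln_le_sub_1 ((INR n + 1) / INR n) ltac:(apply Rdiv_lt_0_compat; lra)).
      replace ((INR n + 1) / INR n - 1) with (/ INR n) in H0 by (field; lra).
      apply Rmult_le_compat_l with (r := INR n) in H0; [|lra].
      rewrite Rinv_r in H0 by lra. lra. }
    rewrite S_INR in *. nra.
Qed.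

Definition mertens (n : nat) : R := sum_n (fun q => vonMangoldt q / INR q) n.

Lemma mertens_scaled n :
  INR n * mertens n = sum_n (fun d => vonMangoldt d * (INR n / INR d)) n.
Proof.
  unfold mertens. rewrite <- sum_n_Rmult_l. apply sum_n_ext_R. intros d.
  destruct (Nat.eq_dec d 0) as [->|Hd]; [rewrite vonMangoldt_0; unfold Rdiv; ring|].
  field. apply not_0_INR. auto.
Qed.

Lemma floor_div_bounds n d : (d <> 0)%nat ->
  INR (n / d) <= INR n / INR d <= INR (n / d) + 1.
Proof.
  intros Hd. assert (0 < INR d) by (apply lt_0_INR; lia).
  pose proof (Nat.div_mod_eq n d). pose proof (Nat.mod_upper_bound n d Hd).
  apply (f_equal INR) in H0. rewrite plus_INR, mult_INR in H0.
  apply lt_INR in H1. pose proof (pos_INR (n mod d)).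
  split; apply Rmult_le_reg_r with (INR d); auto; unfold Rdiv;
    rewrite ?Rmult_plus_distr_r, Rmult_assoc, Rinv_l by lra; nra.
Qed.

Theorem mertens_ge n : (1 <= n)%nat -> ln (INR n) - 1 <= mertens n.
Proof.
  intros Hn. pose proof (INR_ge_1 n Hn).
  assert (ln_fact n <= INR n * mertens n).
  { rewrite mertens_scaled, ln_fact_legendre. apply sum_n_Rle. intros d Hd.
    destruct (Nat.eq_dec d 0) as [->|Hd0]; [rewrite vonMangoldt_0; lra|].
    apply Rmult_le_compat_l; [apply vonMangoldt_ge_0|apply floor_div_bounds; auto]. }
  pose proof (ln_fact_ge n Hn).
  apply Rmult_le_reg_l with (INR n); nra.
Qed.

Theorem mertens_le n : (1 <= n)%nat -> mertens n <= ln (INR n) + 4 * ln 2.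
Proof.
  intros Hn. pose proof (INR_ge_1 n Hn).
  assert (INR n * mertens n <= ln_fact n + psi n).
  { rewrite mertens_scaled, ln_fact_legendre. unfold psi. rewrite <- sum_n_Rplus.
    apply sum_n_Rle. intros d Hd.
    destruct (Nat.eq_dec d 0) as [->|Hd0]; [rewrite vonMangoldt_0; lra|].
    pose proof (vonMangoldt_ge_0 d). pose proof (floor_div_bounds n d Hd0). nra. }
  pose proof (ln_fact_le n). pose proof (chebyshev_psi_le n).
  apply Rmult_le_reg_l with (INR n); nra.
Qed.

(** * Part (i): Abel summation against [1 / ln^2 (m q)] *)

Section AbelSummation.

Variables (b f : nat -> R) (M : R) (a c : nat).
Hypothesis b_partial_bound : forall n, Rabs (sum_n b n) <= M.
Hypothesis f_ge_0 : forall q, 0 <= f q.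
Hypothesis f_decr : forall q, (S a <= q < c)%nat -> f (S q) <= f q.

Let bf q := b q * f q.

Lemma abel_bound_ge_0 : 0 <= M.
Proof. eapply Rle_trans; [apply Rabs_pos|apply (b_partial_bound 0)]. Qed.

Lemma abel_summation_partial c' : (S a <= c' <= c)%nat ->
  Rabs (sum_n bf c' - sum_n bf a - sum_n b c' * f c')
    <= M * f (S a) + M * (f (S a) - f c').
Proof.
  pose proof abel_bound_ge_0. intros [H1 H2]. induction H1 as [|c' H1 IH].
  - rewrite sum_n_Sn, (sum_n_Sn b).
    replace (sum_n bf a + bf (S a) - sum_n bf a - (sum_n b a + b (S a)) * f (S a))
      with (- (sum_n b a * f (S a))) by (unfold bf; ring).
    rewrite Rabs_Ropp, Rabs_mult, (Rabs_right (f (S a))) by (apply Rle_ge, f_ge_0).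
    pose proof (b_partial_bound a). pose proof (f_ge_0 (S a)). nra.
  - rewrite sum_n_Sn, (sum_n_Sn b).
    replace (sum_n bf c' + bf (S c') - sum_n bf a - (sum_n b c' + b (S c')) * f (S c'))
      with ((sum_n bf c' - sum_n bf a - sum_n b c' * f c') + sum_n b c' * (f c' - f (S c')))
      by (unfold bf; ring).
    eapply Rle_trans; [apply Rabs_triang|]. rewrite Rabs_mult.
    assert (f (S c') <= f c') by (apply f_decr; lia).
    rewrite (Rabs_right (f c' - f (S c'))) by lra.
    pose proof (IH ltac:(lia)). pose proof (b_partial_bound c'). nra.
Qed.

Theorem abel_summation_bound : (a <= c)%nat ->
  Rabs (sum_n bf c - sum_n bf a) <= 2 * M * f (S a).
Proof.
  pose proof abel_bound_ge_0. intros Hac. destruct (Nat.eq_dec a c) as [<-|Hne].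
  { rewrite Rminus_diag, Rabs_R0. pose proof (f_ge_0 (S a)). nra. }
  pose proof (abel_summation_partial c ltac:(lia)) as P.
  assert (Rabs (sum_n b c * f c) <= M * f c).
  { rewrite Rabs_mult, (Rabs_right (f c)) by (apply Rle_ge, f_ge_0).
    apply Rmult_le_compat_r; auto. }
  pose proof (Rabs_triang (sum_n bf c - sum_n bf a - sum_n b c * f c) (sum_n b c * f c)).
  replace (sum_n bf c - sum_n bf a - sum_n b c * f c + sum_n b c * f c)
    with (sum_n bf c - sum_n bf a) in * by ring.
  lra.
Qed.

End AbelSummation.

Definition ln_step (q : nat) : R := ln (INR (S q)) - ln (INR q).

Lemma sum_ln_step n : sum_n ln_step n = ln (INR (S n)).
Proof.
  induction n as [|n IH].
  - rewrite sum_O. unfold ln_step. simpl. rewrite ln_0. lra.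
  - rewrite sum_n_Sn, IH. unfold ln_step. lra.
Qed.

Lemma ln_step_bounds q : (1 <= q)%nat -> 0 <= ln_step q <= 1.
Proof.
  intros Hq. unfold ln_step. pose proof (INR_ge_1 q Hq). rewrite S_INR. split.
  - assert (ln (INR q) <= ln (INR q + 1)) by (apply ln_le; lra). lra.
  - rewrite <- ln_div by lra.
    pose proof (ln_le_sub_1 ((INR q + 1) / INR q) ltac:(apply Rdiv_lt_0_compat; lra)).
    replace ((INR q + 1) / INR q - 1) with (/ INR q) in H0 by (field; lra).
    pose proof (Rinv_le_contravar 1 (INR q) ltac:(lra) H). rewrite Rinv_1 in H1. lra.
Qed.

Definition mertens_error (q : nat) : R := vonMangoldt q / INR q - ln_step q.

Lemma mertens_error_partial_bound n : Rabs (sum_n mertens_error n) <= 4.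
Proof.
  unfold mertens_error. rewrite sum_n_Rminus, sum_ln_step. fold (mertens n).
  pose proof ln2_lt_1. pose proof ln2_pos.
  destruct (Nat.eq_dec n 0) as [->|Hn].
  - unfold mertens. rewrite sum_O, vonMangoldt_0. simpl. rewrite ln_1.
    unfold Rdiv. rewrite Rmult_0_l, Rminus_0_r, Rabs_R0. lra.
  - pose proof (mertens_ge n ltac:(lia)). pose proof (mertens_le n ltac:(lia)).
    pose proof (ln_step_bounds n ltac:(lia)). unfold ln_step in *.
    apply Rabs_le. lra.
Qed.

Definition inv_ln (m : nat) (t : R) : R := 1 / ln (INR m * t).
Definition inv_ln_sq (m : nat) (t : R) : R := 1 / (ln (INR m * t)) ^ 2.

Lemma ln_mul_pos m t : (1 <= m)%nat -> 2 <= t -> 0 < ln (INR m * t).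
Proof.
  intros Hm Ht. pose proof (INR_ge_1 m Hm).
  rewrite <- ln_1. apply ln_increasing; nra.
Qed.

Lemma ln_mul_le m s t : (1 <= m)%nat -> 0 < s -> s <= t -> ln (INR m * s) <= ln (INR m * t).
Proof. intros Hm Hs Ht. pose proof (INR_ge_1 m Hm). apply ln_le; nra. Qed.

Lemma inv_ln_sq_ge_0 m t : 0 <= inv_ln_sq m t.
Proof.
  unfold inv_ln_sq, Rdiv. rewrite Rmult_1_l. apply Rinv_ge_0, pow2_ge_0.
Qed.

Lemma inv_ln_sq_decr m s t : (1 <= m)%nat -> 2 <= s -> s <= t -> inv_ln_sq m t <= inv_ln_sq m s.
Proof.
  intros Hm Hs Ht. unfold inv_ln_sq.
  pose proof (ln_mul_pos m s Hm Hs). pose proof (ln_mul_le m s t Hm ltac:(lra) Ht).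
  unfold Rdiv. rewrite !Rmult_1_l. apply Rinv_le_contravar; nra.
Qed.

(* With [l = ln (m q)] and [d = ln_step q], so that [l + d = ln (m (q + 1))]. *)
Lemma inv_sq_telescoping_error l d : 0 < l -> 0 <= d <= 1 ->
  0 <= d / l ^ 2 - (1 / l - 1 / (l + d)) <= 1 / l ^ 2 - 1 / (l + d) ^ 2.
Proof.
  intros Hl Hd.
  replace (d / l ^ 2 - (1 / l - 1 / (l + d))) with (d * d / (l ^ 2 * (l + d))) by (field; lra).
  replace (1 / l ^ 2 - 1 / (l + d) ^ 2)
    with (d * d / (l ^ 2 * (l + d)) + d * (l + (l + d) - d * (l + d)) / (l ^ 2 * (l + d) ^ 2))
    by (field; lra).
  assert (d * (l + d) <= 1 * (l + d)) by (apply Rmult_le_compat_r; lra).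
  assert (0 <= d * (l + (l + d) - d * (l + d)) / (l ^ 2 * (l + d) ^ 2)).
  { apply Rdiv_le_0_compat; [nra|]. apply Rmult_lt_0_compat; nra. }
  assert (0 <= d * d / (l ^ 2 * (l + d))).
  { apply Rdiv_le_0_compat; [nra|]. apply Rmult_lt_0_compat; nra. }
  lra.
Qed.

Lemma ln_mul_S m q : (1 <= m)%nat -> (1 <= q)%nat ->
  ln (INR m * INR (S q)) = ln (INR m * INR q) + ln_step q.
Proof.
  intros Hm Hq. unfold ln_step.
  pose proof (INR_ge_1 m Hm). pose proof (INR_ge_1 q Hq).
  assert (0 < INR (S q)) by (apply lt_0_INR; lia).
  rewrite !ln_mult by lra. ring.
Qed.

Lemma ln_step_weighted_sum m a c : (1 <= m)%nat -> (1 <= a)%nat -> (a <= c)%nat ->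
  let W n : R := sum_n (fun q => ln_step q * inv_ln_sq m (INR q)) n in
  0 <= (W c - W a) - (inv_ln m (INR (S a)) - inv_ln m (INR (S c)))
    <= inv_ln_sq m (INR (S a)) - inv_ln_sq m (INR (S c)).
Proof.
  intros Hm Ha Hac W. induction Hac as [|c Hac IH]; [lra|].
  assert (W (S c) = W c + ln_step (S c) * inv_ln_sq m (INR (S c))) as -> by apply sum_n_Sn.
  assert (Hq : 2 <= INR (S c)) by (apply (le_INR 2); lia).
  pose proof (inv_sq_telescoping_error _ _ (ln_mul_pos m _ Hm Hq)
                (ln_step_bounds (S c) ltac:(lia))) as St.
  rewrite <- ln_mul_S in St by lia.
  unfold inv_ln_sq, inv_ln in *. unfold Rdiv in *. lra.
Qed.

Lemma inv_ln_diff_bounds m s t : (1 <= m)%nat -> 2 <= s <= t -> t <= s + 1 ->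
  0 <= inv_ln m s - inv_ln m t <= inv_ln_sq m s.
Proof.
  intros Hm [Hs Hst] Ht. unfold inv_ln, inv_ln_sq.
  pose proof (INR_ge_1 m Hm).
  pose proof (ln_mul_pos m s Hm Hs). pose proof (ln_mul_le m s t Hm ltac:(lra) Hst).
  assert (Hd : ln (INR m * t) - ln (INR m * s) = ln (t / s)).
  { rewrite ln_div, !ln_mult by nra. ring. }
  assert (0 <= ln (t / s) <= 1).
  { split; [lra|]. eapply Rle_trans; [apply ln_le_sub_1, Rdiv_lt_0_compat; lra|].
    apply Rmult_le_reg_r with s; [lra|].
    replace ((t / s - 1) * s) with (t - s) by (field; lra). lra. }
  replace (1 / ln (INR m * s) - 1 / ln (INR m * t))
    with (ln (t / s) / (ln (INR m * s) * ln (INR m * t))) by (rewrite <- Hd; field; lra).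
  split; [apply Rdiv_le_0_compat; nra|].
  apply Rle_trans with (1 / (ln (INR m * s) * ln (INR m * t))).
  - unfold Rdiv. apply Rmult_le_compat_r; [|lra].
    left. apply Rinv_0_lt_compat. nra.
  - unfold Rdiv. rewrite !Rmult_1_l. apply Rinv_le_contravar; simpl; nra.
Qed.

Lemma term_split m q : (1 <= m)%nat -> (2 <= q)%nat ->
  term m q = mertens_error q * inv_ln_sq m (INR q) + ln_step q * inv_ln_sq m (INR q).
Proof.
  intros Hm Hq. unfold term, mertens_error, inv_ln_sq.
  pose proof (ln_mul_pos m (INR q) Hm ltac:(apply (le_INR 2); lia)).
  pose proof (INR_ge_1 q ltac:(lia)). field. lra.
Qed.

Theorem term_sum_estimate m a c y z : (1 <= m)%nat -> (1 <= a <= c)%nat ->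
  INR a < y <= INR (S a) -> INR c <= z < INR c + 1 -> 2 <= y <= z ->
  Rabs (sum_n (term m) c - sum_n (term m) a - (inv_ln m y - inv_ln m z))
    <= 11 * inv_ln_sq m y.
Proof.
  intros Hm [Ha Hac] [Hy1 Hy2] [Hz1 Hz2] [Hy Hyz].
  rewrite S_INR in Hy2.
  rewrite (sum_n_diff_ext (term m)
             (fun q => mertens_error q * inv_ln_sq m (INR q) + ln_step q * inv_ln_sq m (INR q)))
    by (auto; intros q Hq; apply term_split; lia).
  rewrite !sum_n_Rplus.
  assert (Ab : Rabs (sum_n (fun q => mertens_error q * inv_ln_sq m (INR q)) c -
                     sum_n (fun q => mertens_error q * inv_ln_sq m (INR q)) a)
               <= 2 * 4 * inv_ln_sq m (INR (S a))).
  { apply abel_summation_bound; auto.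
    - apply mertens_error_partial_bound.
    - intros; apply inv_ln_sq_ge_0.
    - intros q Hq. apply inv_ln_sq_decr; [auto|apply (le_INR 2); lia|apply le_INR; lia]. }
  pose proof (ln_step_weighted_sum m a c Hm Ha Hac) as G. cbv beta zeta in G.
  rewrite !S_INR in *.
  pose proof (inv_ln_diff_bounds m y (INR a + 1) Hm ltac:(lra) ltac:(lra)).
  pose proof (inv_ln_diff_bounds m z (INR c + 1) Hm ltac:(lra) ltac:(lra)).
  pose proof (inv_ln_sq_decr m y (INR a + 1) Hm Hy Hy2).
  pose proof (inv_ln_sq_decr m y z Hm Hy Hyz).
  pose proof (inv_ln_sq_ge_0 m (INR c + 1)).
  apply Rabs_le. apply Rabs_le_between in Ab. lra.
Qed.

Lemma term_ge_0 m q : 0 <= term m q.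
Proof.
  unfold term, Rdiv. apply Rmult_le_pos; [apply vonMangoldt_ge_0|].
  apply Rinv_ge_0, Rmult_le_pos; [apply pos_INR|apply pow2_ge_0].
Qed.

Lemma nat_floor_exists z : 0 <= z -> exists c : nat, INR c <= z < INR c + 1.
Proof.
  intros Hz. destruct (archimed z) as [H1 H2].
  assert (0 < up z)%Z by (apply lt_IZR; lra).
  exists (Z.to_nat (up z - 1)). rewrite INR_IZR_INZ, Z2Nat.id, minus_IZR by lia. lra.
Qed.

Lemma nat_ceil_exists y : 2 <= y -> exists a : nat, (1 <= a)%nat /\ INR a < y <= INR (S a).
Proof.
  intros Hy. destruct (nat_floor_exists y ltac:(lra)) as [c [H1 H2]].
  destruct (Req_dec (INR c) y) as [E|E].
  - assert (2 <= c)%nat by (apply (INR_le 2); simpl; lra).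
    exists (c - 1)%nat. replace (S (c - 1)) with c by lia.
    rewrite minus_INR by lia. simpl. split; [lia|lra].
  - exists c. rewrite S_INR. split; [|lra]. destruct c; [simpl in *; lra|lia].
Qed.

Lemma sum_between_sum_n f y z a c : (a <= c)%nat ->
  INR a < y <= INR (S a) -> INR c <= z < INR c + 1 ->
  sum_between f y z = sum_n f c - sum_n f a.
Proof.
  intros Hac [Hy1 Hy2] [Hz1 Hz2]. unfold sum_between.
  set (ind := fun q : nat => if Rle_dec y (INR q) then if Rle_dec (INR q) z then f q else 0 else 0).
  destruct (archimed z) as [H1 H2].
  assert (Hc : (c <= Z.to_nat (up z))%nat).
  { apply INR_le. rewrite (INR_IZR_INZ (Z.to_nat (up z))), Z2Nat.id; [lra|].
    apply le_IZR. pose proof (pos_INR c). lra. }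
  rewrite (sum_n_trailing_zeros ind c) by (auto; intros k Hk; unfold ind;
    destruct Rle_dec; auto; destruct Rle_dec; auto;
    assert (INR (S c) <= INR k) by (apply le_INR; lia); rewrite S_INR in *; lra).
  rewrite <- (Rminus_0_r (sum_n ind c)).
  replace 0 with (sum_n ind a).
  2:{ apply sum_n_zero. intros k Hk. unfold ind. apply le_INR in Hk.
      destruct Rle_dec; [lra|auto]. }
  apply sum_n_diff_ext; auto. intros q [Hq1 Hq2]. unfold ind.
  apply le_INR in Hq1. apply le_INR in Hq2.
  destruct Rle_dec; [|lra]. destruct Rle_dec; [auto|lra].
Qed.

Lemma sum_from_y_sum_n f y a N : (a <= N)%nat -> INR a < y <= INR (S a) ->
  sum_n (from_y f y) N = sum_n f N - sum_n f a.
Proof.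
  intros HN [Hy1 Hy2]. rewrite <- (Rminus_0_r (sum_n (from_y f y) N)).
  replace 0 with (sum_n (from_y f y) a).
  2:{ apply sum_n_zero. intros k Hk. unfold from_y. apply le_INR in Hk.
      destruct Rle_dec; [lra|auto]. }
  apply sum_n_diff_ext; auto. intros q [Hq1 _]. unfold from_y.
  apply le_INR in Hq1. destruct Rle_dec; [auto|lra].
Qed.

Theorem sum_between_estimate m y z : (1 <= m)%nat -> 2 <= y -> y <= z ->
  Rabs (sum_between (term m) y z - (1 / ln (INR m * y) - 1 / ln (INR m * z)))
    <= 11 / ln (INR m * y) ^ 2.
Proof.
  intros Hm Hy Hyz.
  destruct (nat_ceil_exists y Hy) as [a [Ha Hya]].
  destruct (nat_floor_exists z ltac:(lra)) as [c Hzc].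
  assert (Hac : (a <= c)%nat).
  { enough (a < S c)%nat by lia. apply INR_lt. rewrite S_INR. lra. }
  rewrite (sum_between_sum_n _ y z a c) by auto.
  pose proof (term_sum_estimate m a c y z Hm (conj Ha Hac) Hya Hzc (conj Hy Hyz)).
  unfold inv_ln, inv_ln_sq in *. unfold Rdiv in *. lra.
Qed.

Lemma series_nonneg_bounded (a : nat -> R) (M : R) :
  (forall n, 0 <= a n) -> (forall n, sum_n a n <= M) ->
  ex_series a /\ Series a <= M.
Proof.
  intros Ha HM.
  assert (Hincr : forall n, sum_n a n <= sum_n a (S n)).
  { intros n. rewrite sum_n_Sn. specialize (Ha (S n)). lra. }
  destruct (ex_finite_lim_seq_incr (sum_n a) M Hincr HM) as [l Hl].
  assert (Series a = l) as -> by (apply is_series_unique; exact Hl).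
  split; [exists l; exact Hl|].
  apply (is_lim_seq_le (sum_n a) (fun _ => M) l M); auto using is_lim_seq_const.
Qed.

Lemma sum_n_le_Series (a : nat -> R) n :
  (forall k, 0 <= a k) -> ex_series a -> sum_n a n <= Series a.
Proof.
  intros Ha He. apply (is_lim_seq_incr_compare (sum_n a)); [apply Series_correct, He|].
  intros k. rewrite sum_n_Sn. specialize (Ha (S k)). lra.
Qed.

Lemma inv_ln_eventually_le m eps : (1 <= m)%nat -> 0 < eps ->
  exists N0 : nat, forall N, (N0 <= N)%nat -> inv_ln m (INR N) <= eps.
Proof.
  intros Hm He. pose proof (exp_pos (1 / eps)).
  destruct (nat_floor_exists (exp (1 / eps) + 2)) as [K [_ HK]]; [lra|].
  exists K. intros N HN%le_INR. unfold inv_ln.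
  assert (Hl : 1 / eps <= ln (INR m * INR N)).
  { rewrite <- (ln_exp (1 / eps)). pose proof (INR_ge_1 m Hm). apply ln_le; nra. }
  assert (0 < 1 / eps) by (apply Rdiv_lt_0_compat; lra).
  replace eps with (1 / (1 / eps)) by (field; lra).
  unfold Rdiv. rewrite !Rmult_1_l. apply Rinv_le_contravar; lra.
Qed.

Theorem tail_series_estimate m y : (1 <= m)%nat -> 2 <= y ->
  ex_series (from_y (term m) y) /\
  Rabs (Series (from_y (term m) y) - 1 / ln (INR m * y)) <= 11 / ln (INR m * y) ^ 2.
Proof.
  intros Hm Hy.
  destruct (nat_ceil_exists y Hy) as [a [Ha Hya]].
  assert (Hpart : forall N, (S a <= N)%nat ->
    Rabs (sum_n (from_y (term m) y) N - (inv_ln m y - inv_ln m (INR N)))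
      <= 11 * inv_ln_sq m y).
  { intros N HN. rewrite (sum_from_y_sum_n _ y a N) by (auto; lia).
    assert (INR (S a) <= INR N) by (apply le_INR; auto).
    apply term_sum_estimate; auto; lra || lia. }
  assert (Hinv : forall N, (S a <= N)%nat -> 0 <= inv_ln m (INR N)).
  { intros N HN. unfold inv_ln. apply Rdiv_le_0_compat; [lra|].
    apply ln_mul_pos; auto. apply (le_INR 2). lia. }
  assert (Hnn : forall n, 0 <= from_y (term m) y n).
  { intros n. unfold from_y. destruct Rle_dec; [apply term_ge_0|lra]. }
  destruct (series_nonneg_bounded _ (inv_ln m y + 11 * inv_ln_sq m y) Hnn) as [Hex Hup].
  { intros n. apply Rle_trans with (sum_n (from_y (term m) y) (max n (S a))).
    - apply sum_n_le_upper; auto. lia.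
    - specialize (Hpart (max n (S a)) ltac:(lia)). specialize (Hinv (max n (S a)) ltac:(lia)).
      apply Rabs_le_between in Hpart. lra. }
  assert (Hlow : inv_ln m y - 11 * inv_ln_sq m y <= Series (from_y (term m) y)).
  { apply Rle_plus_epsilon. intros eps He.
    destruct (inv_ln_eventually_le m eps Hm He) as [N0 HN0].
    specialize (HN0 (max N0 (S a)) ltac:(lia)).
    specialize (Hpart (max N0 (S a)) ltac:(lia)). apply Rabs_le_between in Hpart.
    pose proof (sum_n_le_Series _ (max N0 (S a)) Hnn Hex). lra. }
  split; auto. apply Rabs_le. unfold inv_ln, inv_ln_sq in *. unfold Rdiv in *. lra.
Qed.

(** * A bound for the Dirichlet series of [Lambda] *)

(* [inv_rpow n s = n^-s]; for [n = 0] it is the junk value [exp 0 = 1], which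
   [zeta_term] replaces by [0]. *)
Definition inv_rpow (n : nat) (s : R) : R := exp (- s * ln (INR n)).

Definition zeta_term (n : nat) (s : R) : R :=
  if Nat.eq_dec n 0 then 0 else inv_rpow n s.

Definition zeta_sum (N : nat) (s : R) : R := sum_n (fun n => zeta_term n s) N.

Definition zeta_deriv_term (n : nat) (s : R) : R := zeta_term n s * ln (INR n).

Definition zeta_deriv_sum (N : nat) (s : R) : R := sum_n (fun n => zeta_deriv_term n s) N.

Definition vonMangoldt_dirichlet (N : nat) (s : R) : R :=
  sum_n (fun q => vonMangoldt q * inv_rpow q s) N.

Lemma exp_le_compat x y : x <= y -> exp x <= exp y.
Proof. intros [H|<-]; [left; apply exp_increasing; auto|lra]. Qed.

Lemma exp_neg_lt_1 x : 0 < x -> exp (- x) < 1.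
Proof. intros H. rewrite <- exp_0. apply exp_increasing. lra. Qed.

Lemma inv_rpow_pos n s : 0 < inv_rpow n s.
Proof. apply exp_pos. Qed.

Lemma zeta_term_ge_0 n s : 0 <= zeta_term n s.
Proof. unfold zeta_term. destruct Nat.eq_dec; [lra|left; apply inv_rpow_pos]. Qed.

Lemma zeta_deriv_term_ge_0 n s : 0 <= zeta_deriv_term n s.
Proof.
  unfold zeta_deriv_term, zeta_term. destruct Nat.eq_dec; [lra|].
  apply Rmult_le_pos; [left; apply inv_rpow_pos|apply ln_ge_0, INR_ge_1; lia].
Qed.

Lemma zeta_term_mul d k s : (1 <= d)%nat -> zeta_term (d * k) s = inv_rpow d s * zeta_term k s.
Proof.
  intros Hd. unfold zeta_term. destruct (Nat.eq_dec k 0) as [->|Hk].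
  - rewrite Nat.mul_0_r. destruct Nat.eq_dec; [lra|lia].
  - destruct Nat.eq_dec; [lia|]. unfold inv_rpow. rewrite <- exp_plus, mult_INR, ln_mult.
    + f_equal. ring.
    + apply lt_0_INR. lia.
    + apply lt_0_INR. lia.
Qed.

Lemma zeta_sum_le_upper a b s : (a <= b)%nat -> zeta_sum a s <= zeta_sum b s.
Proof. intros H. apply sum_n_le_upper; auto using zeta_term_ge_0. Qed.

Lemma zeta_deriv_sum_le_upper a b s : (a <= b)%nat -> zeta_deriv_sum a s <= zeta_deriv_sum b s.
Proof. intros H. apply sum_n_le_upper; auto using zeta_deriv_term_ge_0. Qed.

Lemma zeta_sum_ge_1 N s : (1 <= N)%nat -> 1 <= zeta_sum N s.
Proof.
  intros HN. replace 1 with (zeta_term 1 s).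
  - apply (sum_n_ge_term (fun n => zeta_term n s)); auto using zeta_term_ge_0.
  - unfold zeta_term, inv_rpow. simpl. rewrite ln_1, Rmult_0_r. apply exp_0.
Qed.

(* Truncated form of [(-zeta'/zeta) * zeta = -zeta']. *)
Lemma vonMangoldt_dirichlet_mul_zeta_le N M s : (N * N <= M)%nat ->
  vonMangoldt_dirichlet N s * zeta_sum N s <= zeta_deriv_sum M s.
Proof.
  intros HM. unfold zeta_deriv_sum, zeta_deriv_term.
  rewrite sum_mul_ln_dirichlet by reflexivity.
  unfold vonMangoldt_dirichlet. rewrite <- sum_n_Rmult_r.
  assert (HNM : (N <= M)%nat) by (destruct N; nia).
  apply Rle_trans
    with (sum_n (fun d => vonMangoldt d * sum_n (fun k => zeta_term (d * k) s) (M / d)) N).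
  - apply sum_n_Rle. intros d Hd. destruct (Nat.eq_dec d 0) as [->|Hd0].
    { rewrite vonMangoldt_0. lra. }
    rewrite Rmult_assoc. apply Rmult_le_compat_l; [apply vonMangoldt_ge_0|].
    unfold zeta_sum. rewrite <- sum_n_Rmult_l.
    rewrite <- (sum_n_ext (fun k => zeta_term (d * k) s)) by (intros; apply zeta_term_mul; lia).
    apply sum_n_le_upper.
    + apply Nat.div_le_lower_bound; nia.
    + intros. apply zeta_term_ge_0.
  - apply sum_n_le_upper; auto. intros d.
    apply Rmult_le_pos; [apply vonMangoldt_ge_0|].
    apply sum_n_nonneg. intros; apply zeta_term_ge_0.
Qed.

Lemma ln_3_ge_1 : 1 <= ln 3.
Proof. rewrite <- (ln_exp 1). apply ln_le; [apply exp_pos|apply exp_le_3]. Qed.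

(* [ln (n+1) <= ln n * (1 + s (ln (n+1) - ln n)) <= ln n * (n+1)^s / n^s] since [ln n >= 1]. *)
Lemma zeta_deriv_term_decr n s : (3 <= n)%nat -> 1 <= s ->
  zeta_deriv_term (S n) s <= zeta_deriv_term n s.
Proof.
  intros Hn Hs. unfold zeta_deriv_term, zeta_term, inv_rpow.
  do 2 (destruct Nat.eq_dec; [lia|]).
  set (a := ln (INR n)). set (d := ln (INR (S n)) - a).
  replace (ln (INR (S n))) with (a + d) by (unfold d; ring).
  assert (Ha : 1 <= a).
  { eapply Rle_trans; [apply ln_3_ge_1|]. apply ln_le; [lra|].
    apply (le_INR 3) in Hn. simpl in Hn. lra. }
  assert (Hd : 0 <= d).
  { unfold d, a. enough (ln (INR n) <= ln (INR (S n))) by lra.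
    apply ln_le; [apply lt_0_INR; lia|apply le_INR; lia]. }
  replace (- s * (a + d)) with (- s * a + - (s * d)) by ring. rewrite exp_plus.
  pose proof (exp_ineq1_le (s * d)). pose proof (exp_pos (- s * a)).
  assert (exp (- (s * d)) * exp (s * d) = 1) by (rewrite <- exp_plus, Rplus_opp_l; apply exp_0).
  assert (0 <= (a - 1) * d) by (apply Rmult_le_pos; lra).
  assert (0 <= a * (d * (s - 1))) by (apply Rmult_le_pos; [lra|apply Rmult_le_pos; lra]).
  assert (a * (1 + s * d) <= a * exp (s * d)) by (apply Rmult_le_compat_l; lra).
  assert (exp (- (s * d)) * (a + d) <= a).
  { pose proof (exp_pos (- (s * d))). rewrite <- (Rmult_1_l a) at 2. rewrite <- H1. nra. }
  rewrite Rmult_assoc. apply Rmult_le_compat_l; lra.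
Qed.

Lemma exp_scale_le_chord al y : 0 <= al <= 1 -> y <= 0 ->
  exp (al * y) <= 1 + al * (exp y - 1).
Proof.
  intros Hal Hy. destruct (Req_dec y 0) as [->|E].
  { rewrite Rmult_0_r, exp_0. lra. }
  set (phi := fun x => 1 + al * (exp x - 1) - exp (al * x)).
  destruct (MVT_cor2 phi (fun x => al * exp x - al * exp (al * x)) y 0 ltac:(lra))
    as [c [Hc1 Hc2]].
  { intros c _. apply is_derive_Reals. unfold phi. auto_derive; auto. ring. }
  unfold phi in Hc1. rewrite Rmult_0_r, exp_0 in Hc1.
  assert (exp c <= exp (al * c)) by (apply exp_le_compat; nra).
  assert (0 <= - (al * exp c - al * exp (al * c)) * (0 - y)) by (apply Rmult_le_pos; nra).
  lra.
Qed.

Lemma ln_3_5_le_ln_2 : 5 * ln 3 + 3 * ln 5 <= 15 * ln 2.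
Proof.
  assert (Hh : ln (3 ^ 5 * 5 ^ 3) <= ln (2 ^ 15)).
  { apply ln_le; [apply Rmult_lt_0_compat; apply pow_lt|simpl]; lra. }
  rewrite ln_mult, !ln_pow in Hh by (try apply pow_lt; lra). simpl in Hh. lra.
Qed.

(* Linear in [X], so it suffices to check the endpoints [X = 0] and [X = 1]. *)
Lemma ln_3_5_chord X : 0 <= X <= 1 ->
  ln 3 * (1 + (ln 3 - ln 2) / ln 2 * (X - 1)) / 3 + ln 5 * X / 5 <= ln 2 / 2 * (1 + X).
Proof.
  intros HX. pose proof ln2_pos. pose proof ln_3_5_le_ln_2.
  assert (ln 2 <= ln 3) by (apply ln_le; lra).
  assert (ln 3 <= ln 2 + ln 2) by (rewrite <- ln_mult by lra; apply ln_le; lra).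
  assert (Hend : ln 3 * (1 - (ln 3 - ln 2) / ln 2) / 3 <= ln 2 / 2).
  { replace (ln 3 * (1 - (ln 3 - ln 2) / ln 2) / 3) with (ln 3 * (2 * ln 2 - ln 3) / (3 * ln 2))
      by (field; lra).
    apply Rmult_le_reg_r with (3 * ln 2); [lra|]. unfold Rdiv.
    rewrite Rmult_assoc, Rinv_l by lra. nra. }
  replace (ln 3 * (1 + (ln 3 - ln 2) / ln 2 * (X - 1)) / 3 + ln 5 * X / 5)
    with ((1 - X) * (ln 3 * (1 - (ln 3 - ln 2) / ln 2) / 3) + X * (ln 3 / 3 + ln 5 / 5))
    by (field; lra).
  nra.
Qed.

Lemma inv_rpow_2_4 t :
  2 * inv_rpow 2 (1 + t) = exp (- t * ln 2) /\ 4 * inv_rpow 4 (1 + t) = exp (- t * ln 2) ^ 2.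
Proof.
  unfold inv_rpow. replace (INR 2) with 2 by (simpl; lra).
  replace (INR 4) with (2 * 2) by (simpl; lra). rewrite ln_mult by lra.
  replace (- (1 + t) * ln 2) with (- t * ln 2 + - ln 2) by ring.
  replace (- (1 + t) * (ln 2 + ln 2)) with ((- t * ln 2 + - ln 2) + (- t * ln 2 + - ln 2)) by ring.
  rewrite !exp_plus, exp_Ropp, exp_ln by lra. split; field.
Qed.

Lemma inv_rpow_3_le_chord t : 0 <= t ->
  3 * inv_rpow 3 (1 + t)
    <= exp (- t * ln 2) * (1 + (ln 3 - ln 2) / ln 2 * (exp (- t * ln 2) - 1)).
Proof.
  intros Ht. pose proof ln2_pos.
  assert (ln 2 <= ln 3) by (apply ln_le; lra).
  assert (ln 3 <= ln 2 + ln 2) by (rewrite <- ln_mult by lra; apply ln_le; lra).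
  set (al := (ln 3 - ln 2) / ln 2).
  assert (Hal : 0 <= al <= 1).
  { unfold al. split; [apply Rdiv_le_0_compat; lra|].
    apply Rmult_le_reg_r with (ln 2); [lra|].
    unfold Rdiv. rewrite Rmult_assoc, Rinv_l by lra. lra. }
  unfold inv_rpow. replace (INR 3) with 3 by (simpl; lra).
  replace (- (1 + t) * ln 3) with (- t * ln 2 + al * (- t * ln 2) + - ln 3)
    by (unfold al; field; lra).
  rewrite !exp_plus, exp_Ropp, exp_ln by lra.
  pose proof (exp_scale_le_chord al (- t * ln 2) Hal ltac:(nra)).
  pose proof (exp_pos (- t * ln 2)).
  replace (3 * (exp (- t * ln 2) * exp (al * (- t * ln 2)) * / 3))
    with (exp (- t * ln 2) * exp (al * (- t * ln 2))) by (field; lra).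
  apply Rmult_le_compat_l; lra.
Qed.

Lemma inv_rpow_5_le t : 0 <= t -> 5 * inv_rpow 5 (1 + t) <= exp (- t * ln 2) ^ 2.
Proof.
  intros Ht. pose proof ln2_pos.
  assert (ln 2 + ln 2 <= ln 5) by (rewrite <- ln_mult by lra; apply ln_le; lra).
  unfold inv_rpow. replace (INR 5) with 5 by (simpl; lra).
  replace (- (1 + t) * ln 5) with (- t * ln 2 + - (ln 5 - ln 2) * t + - ln 5) by ring.
  rewrite !exp_plus, exp_Ropp, exp_ln by lra.
  assert (exp (- (ln 5 - ln 2) * t) <= exp (- t * ln 2)) by (apply exp_le_compat; nra).
  pose proof (exp_pos (- (ln 5 - ln 2) * t)). pose proof (exp_pos (- t * ln 2)).
  replace (5 * (exp (- t * ln 2) * exp (- (ln 5 - ln 2) * t) * / 5))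
    with (exp (- t * ln 2) * exp (- (ln 5 - ln 2) * t)) by (field; lra).
  simpl. rewrite Rmult_1_r. apply Rmult_le_compat_l; lra.
Qed.

Lemma zeta_deriv_term_3_5 s : 1 <= s ->
  zeta_deriv_term 3 s + zeta_deriv_term 5 s <= zeta_deriv_term 2 s + zeta_deriv_term 4 s.
Proof.
  intros Hs. unfold zeta_deriv_term, zeta_term. repeat (destruct Nat.eq_dec; [lia|]).
  replace s with (1 + (s - 1)) by ring.
  destruct (inv_rpow_2_4 (s - 1)) as [E2 E4].
  pose proof (inv_rpow_3_le_chord (s - 1) ltac:(lra)) as I3.
  pose proof (inv_rpow_5_le (s - 1) ltac:(lra)) as I5.
  set (X := exp (- (s - 1) * ln 2)) in *.
  assert (HX : 0 < X <= 1).
  { pose proof ln2_pos. split; [apply exp_pos|].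
    rewrite <- exp_0. apply exp_le_compat. nra. }
  pose proof (ln_3_5_chord X ltac:(lra)). pose proof ln_3_ge_1.
  assert (ln 2 + ln 2 <= ln 5) by (rewrite <- ln_mult by lra; apply ln_le; lra).
  replace (INR 2) with 2 by (simpl; lra). replace (INR 3) with 3 by (simpl; lra).
  replace (INR 4) with (2 * 2) by (simpl; lra). replace (INR 5) with 5 by (simpl; lra).
  rewrite ln_mult by lra.
  pose proof ln2_pos. nra.
Qed.

(* [n^-s ln n] decreases from [n = 3] on, so pairing [2k+1] with [2k] for [k >= 3]
   (and [3, 5] with [2, 4]) bounds [-zeta'] by twice its even part. *)
Lemma zeta_deriv_sum_le_twice_even K s : (2 <= K)%nat -> 1 <= s ->
  zeta_deriv_sum (2 * K + 1) s <= 2 * sum_n (fun k => zeta_deriv_term (2 * k) s) K.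
Proof.
  intros HK Hs. unfold zeta_deriv_sum. induction HK as [|K HK IH].
  - simpl (2 * 2 + 1)%nat. rewrite !sum_n_Sn, !sum_O. simpl (2 * _)%nat.
    pose proof (zeta_deriv_term_3_5 s Hs).
    unfold zeta_deriv_term at 1 2 7, zeta_term. simpl. rewrite ln_1. lra.
  - replace (2 * S K + 1)%nat with (S (S (2 * K + 1))) by lia.
    rewrite !sum_n_Sn. replace (S (2 * K + 1)) with (2 * S K)%nat by lia.
    pose proof (zeta_deriv_term_decr (2 * S K) s ltac:(lia) Hs). lra.
Qed.

Lemma sum_zeta_deriv_even K s :
  sum_n (fun k => zeta_deriv_term (2 * k) s) K =
  inv_rpow 2 s * (ln 2 * zeta_sum K s + zeta_deriv_sum K s).
Proof.
  unfold zeta_sum, zeta_deriv_sum.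
  rewrite Rmult_plus_distr_l, <- !sum_n_Rmult_l, <- sum_n_Rplus.
  apply sum_n_ext_R. intros k. unfold zeta_deriv_term. rewrite zeta_term_mul by lia.
  unfold zeta_term. destruct (Nat.eq_dec k 0); [simpl; lra|].
  rewrite mult_INR. replace (INR 2) with 2 by (simpl; lra).
  rewrite ln_mult; [ring|lra|apply lt_0_INR; lia].
Qed.

Lemma zeta_deriv_sum_bound K s : (2 <= K)%nat -> 1 <= s ->
  zeta_deriv_sum (2 * K + 1) s * (1 - 2 * inv_rpow 2 s)
    <= 2 * inv_rpow 2 s * ln 2 * zeta_sum (2 * K + 1) s.
Proof.
  intros HK Hs. pose proof (zeta_deriv_sum_le_twice_even K s HK Hs) as H.
  rewrite sum_zeta_deriv_even in H.
  pose proof (zeta_sum_le_upper K (2 * K + 1) s ltac:(lia)).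
  pose proof (zeta_deriv_sum_le_upper K (2 * K + 1) s ltac:(lia)).
  pose proof (inv_rpow_pos 2 s). pose proof ln2_pos.
  assert (inv_rpow 2 s * (ln 2 * zeta_sum K s + zeta_deriv_sum K s)
          <= inv_rpow 2 s * (ln 2 * zeta_sum (2 * K + 1) s + zeta_deriv_sum (2 * K + 1) s)).
  { apply Rmult_le_compat_l; [lra|]. apply Rplus_le_compat; auto.
    apply Rmult_le_compat_l; lra. }
  nra.
Qed.

(* [a n^-(1+a)] is bounded by the integral of [a t^-(1+a)] over [[n-1, n]]. *)
Lemma inv_rpow_tail_step n a : (2 <= n)%nat -> 0 < a ->
  a * inv_rpow n (1 + a) <= inv_rpow (n - 1) a - inv_rpow n a.
Proof.
  intros Hn Ha. unfold inv_rpow. rewrite minus_INR by lia. simpl (INR 1).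
  assert (Hn2 : 2 <= INR n) by (apply (le_INR 2); auto).
  assert (Hl : ln (INR n - 1) <= ln (INR n) - 1 / INR n).
  { replace (INR n - 1) with (INR n * ((INR n - 1) / INR n)) by (field; lra).
    rewrite ln_mult by (try apply Rdiv_lt_0_compat; lra).
    pose proof (ln_le_sub_1 ((INR n - 1) / INR n) ltac:(apply Rdiv_lt_0_compat; lra)).
    replace ((INR n - 1) / INR n - 1) with (- (1 / INR n)) in H by (field; lra). lra. }
  set (e := exp (- a * ln (INR n))). pose proof (exp_pos (- a * ln (INR n))). fold e in H.
  assert (E1 : e * exp (a / INR n) <= exp (- a * ln (INR n - 1))).
  { unfold e. rewrite <- exp_plus. apply exp_le_compat. unfold Rdiv in *. nra. }
  assert (E2 : exp (- (1 + a) * ln (INR n)) = e / INR n).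
  { replace (- (1 + a) * ln (INR n)) with (- a * ln (INR n) + - ln (INR n)) by ring.
    rewrite exp_plus, exp_Ropp, exp_ln by lra. fold e. field. lra. }
  rewrite E2. pose proof (exp_ineq1_le (a / INR n)).
  assert (e * (1 + a / INR n) <= e * exp (a / INR n)) by (apply Rmult_le_compat_l; lra).
  replace (a * (e / INR n)) with (e * (1 + a / INR n) - e) by (field; lra).
  lra.
Qed.

Lemma zeta_sum_tail N M a : (1 <= N <= M)%nat -> 0 < a ->
  zeta_sum M (1 + a) - zeta_sum N (1 + a) <= inv_rpow N a / a.
Proof.
  intros [HN HM] Ha.
  assert (zeta_sum M (1 + a) - zeta_sum N (1 + a) <= (inv_rpow N a - inv_rpow M a) / a).
  { induction HM as [|M HM IH].
    - unfold Rdiv. rewrite !Rminus_diag. lra.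
    - unfold zeta_sum in *. rewrite sum_n_Sn. unfold zeta_term at 2.
      destruct Nat.eq_dec; [lia|].
      pose proof (inv_rpow_tail_step (S M) a ltac:(lia) Ha).
      replace (S M - 1)%nat with M in H by lia.
      apply Rmult_le_reg_l with a; auto.
      replace (a * ((inv_rpow N a - inv_rpow (S M) a) / a))
        with (a * ((inv_rpow N a - inv_rpow M a) / a) + (inv_rpow M a - inv_rpow (S M) a))
        by (field; lra).
      apply Rmult_le_compat_l with (r := a) in IH; lra. }
  pose proof (inv_rpow_pos M a). eapply Rle_trans; [eassumption|].
  unfold Rdiv. apply Rmult_le_compat_r; [left; apply Rinv_0_lt_compat|]; lra.
Qed.

Lemma inv_rpow_eventually_le a eps : 0 < a -> 0 < eps ->
  exists N0 : nat, forall N, (N0 <= N)%nat -> inv_rpow N a <= eps.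
Proof.
  intros Ha He. pose proof (exp_pos (- ln eps / a)).
  destruct (nat_floor_exists (exp (- ln eps / a) + 1)) as [K [_ HK]]; [lra|].
  exists K. intros N HN%le_INR. unfold inv_rpow.
  assert (- ln eps / a <= ln (INR N)).
  { rewrite <- (ln_exp (- ln eps / a)). apply ln_le; [apply exp_pos|lra]. }
  rewrite <- (exp_ln eps) by auto. apply exp_le_compat.
  apply Rmult_le_compat_l with (r := a) in H0; [|lra].
  replace (a * (- ln eps / a)) with (- ln eps) in H0 by (field; lra). lra.
Qed.

(* [ln 2 * 2^-u / (1 - 2^-u) = ln 2 * sum_(j >= 1) 2^-ju]. *)
Definition dirichlet_majorant (u : R) : R :=
  ln 2 * exp (- u * ln 2) / (1 - exp (- u * ln 2)).

Lemma exp_neg_u_ln2_bounds u : 0 < u -> 0 < exp (- u * ln 2) < 1.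
Proof.
  intros Hu. pose proof ln2_pos. split; [apply exp_pos|].
  replace (- u * ln 2) with (- (u * ln 2)) by ring. apply exp_neg_lt_1. nra.
Qed.

Lemma dirichlet_majorant_ge_0 u : 0 < u -> 0 <= dirichlet_majorant u.
Proof.
  intros Hu. pose proof ln2_pos. pose proof (exp_neg_u_ln2_bounds u Hu).
  unfold dirichlet_majorant. apply Rdiv_le_0_compat; nra.
Qed.

Lemma vonMangoldt_dirichlet_ge_0 N s : 0 <= vonMangoldt_dirichlet N s.
Proof.
  apply sum_n_nonneg. intros.
  apply Rmult_le_pos; [apply vonMangoldt_ge_0|left; apply inv_rpow_pos].
Qed.

Lemma vonMangoldt_dirichlet_le_approx N u : (1 <= N)%nat -> 0 < u ->
  vonMangoldt_dirichlet N (1 + u) <= dirichlet_majorant u * (1 + inv_rpow N u / u).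
Proof.
  intros HN Hu. set (K := Nat.max 2 (N * N)). set (M := (2 * K + 1)%nat).
  pose proof (vonMangoldt_dirichlet_mul_zeta_le N M (1 + u) ltac:(unfold M, K; lia)) as H1.
  pose proof (zeta_deriv_sum_bound K (1 + u) ltac:(unfold K; lia) ltac:(lra)) as H2.
  pose proof (zeta_sum_tail N M u ltac:(unfold M, K; nia) Hu) as H3.
  fold M in H2. rewrite Rmult_assoc, (proj1 (inv_rpow_2_4 u)) in H2.
  pose proof (exp_neg_u_ln2_bounds u Hu). pose proof (zeta_sum_ge_1 N (1 + u) HN).
  pose proof (vonMangoldt_dirichlet_ge_0 N (1 + u)). pose proof (inv_rpow_pos N u).
  pose proof ln2_pos.
  assert (0 <= zeta_deriv_sum M (1 + u)).
  { apply sum_n_nonneg. intros; apply zeta_deriv_term_ge_0. }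
  set (q := exp (- u * ln 2)) in *. set (Z := zeta_sum N (1 + u)) in *.
  set (F := vonMangoldt_dirichlet N (1 + u)) in *. set (e := inv_rpow N u / u) in *.
  assert (A : F * Z * (1 - q) <= q * ln 2 * (Z + e)).
  { apply Rle_trans with (zeta_deriv_sum M (1 + u) * (1 - q)); [apply Rmult_le_compat_r; lra|].
    eapply Rle_trans; [apply H2|]. rewrite <- Rmult_assoc.
    apply Rmult_le_compat_l; [nra|lra]. }
  assert (0 <= e) by (apply Rdiv_le_0_compat; lra).
  unfold dirichlet_majorant. fold q e.
  apply Rmult_le_reg_r with (Z * (1 - q)); [nra|].
  replace (ln 2 * q / (1 - q) * (1 + e) * (Z * (1 - q))) with (q * ln 2 * (Z + Z * e))
    by (field; lra).
  rewrite <- Rmult_assoc. eapply Rle_trans; [apply A|].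
  apply Rmult_le_compat_l; nra.
Qed.

Theorem vonMangoldt_dirichlet_le N u : 0 < u ->
  vonMangoldt_dirichlet N (1 + u) <= dirichlet_majorant u.
Proof.
  intros Hu. apply Rle_plus_epsilon. intros eps He.
  pose proof (dirichlet_majorant_ge_0 u Hu).
  destruct (inv_rpow_eventually_le u (eps / (dirichlet_majorant u + 1) * u) Hu)
    as [N0 HN0].
  { apply Rmult_lt_0_compat; [apply Rdiv_lt_0_compat|]; lra. }
  set (N' := Nat.max (Nat.max N0 N) 1).
  specialize (HN0 N' ltac:(unfold N'; lia)).
  pose proof (vonMangoldt_dirichlet_le_approx N' u ltac:(unfold N'; lia) Hu).
  assert (vonMangoldt_dirichlet N (1 + u) <= vonMangoldt_dirichlet N' (1 + u)).
  { apply sum_n_le_upper; [unfold N'; lia|]. intros.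
    apply Rmult_le_pos; [apply vonMangoldt_ge_0|left; apply inv_rpow_pos]. }
  assert (inv_rpow N' u / u <= eps / (dirichlet_majorant u + 1)).
  { apply Rmult_le_reg_r with u; auto. unfold Rdiv at 1.
    rewrite Rmult_assoc, Rinv_l, Rmult_1_r by lra. lra. }
  assert (dirichlet_majorant u * (inv_rpow N' u / u) <= eps).
  { apply Rle_trans with (dirichlet_majorant u * (eps / (dirichlet_majorant u + 1))).
    - apply Rmult_le_compat_l; auto.
    - apply Rmult_le_reg_r with (dirichlet_majorant u + 1); [lra|].
      replace (dirichlet_majorant u * (eps / (dirichlet_majorant u + 1))
               * (dirichlet_majorant u + 1))
        with (dirichlet_majorant u * eps) by (field; lra). nra. }
  nra.
Qed.

(** * Laplace integrals over [[0, U]] *)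

Lemma RInt_sum_n (g : nat -> R -> R) a b N :
  (forall q, (q <= N)%nat -> ex_RInt (g q) a b) ->
  ex_RInt (fun u => sum_n (fun q => g q u) N) a b /\
  RInt (fun u => sum_n (fun q => g q u) N) a b = sum_n (fun q => RInt (g q) a b) N.
Proof.
  intros H. induction N as [|N IH].
  - rewrite sum_O. split.
    + apply ex_RInt_ext with (g 0%nat); [intros; rewrite sum_O; auto|apply H; lia].
    + apply RInt_ext. intros; rewrite sum_O; auto.
  - destruct IH as [E1 E2]; [intros; apply H; lia|].
    assert (E3 : ex_RInt (g (S N)) a b) by (apply H; lia).
    set (G := fun u => sum_n (fun q => g q u) N).
    assert (Hsum : forall u, sum_n (fun q => g q u) (S N) = plus (G u) (g (S N) u))
      by (intros; apply sum_Sn).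
    split.
    + apply ex_RInt_ext with (fun u => plus (G u) (g (S N) u)); [intros; auto|].
      apply (ex_RInt_plus G (g (S N))); auto.
    + rewrite (RInt_ext _ (fun u => plus (G u) (g (S N) u))) by (intros; auto).
      rewrite (RInt_plus G (g (S N))), sum_Sn by auto. fold G in E2. rewrite E2. reflexivity.
Qed.

Lemma ex_RInt_derivable (f : R -> R) a b : (forall x, ex_derive f x) -> ex_RInt f a b.
Proof.
  intros H. apply (ex_RInt_continuous (V := R_CompleteNormedModule)). intros z _.
  apply continuity_pt_filterlim, derivable_continuous_pt, ex_derive_Reals_0, H.
Qed.

Lemma RInt_scal_R (k : R) (f : R -> R) a b :
  ex_RInt f a b -> RInt (fun u => k * f u) a b = k * RInt f a b.
Proof. intros H. exact (RInt_scal f a b k H). Qed.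

Lemma is_RInt_exp k U : 0 < k ->
  is_RInt (fun u => exp (- k * u)) 0 U ((1 - exp (- k * U)) / k).
Proof.
  intros Hk. set (F := fun u => - exp (- k * u) / k).
  replace ((1 - exp (- k * U)) / k) with (minus (F U) (F 0)).
  2:{ unfold F, minus, plus, opp. simpl. rewrite Rmult_0_r, exp_0. field. lra. }
  apply (is_RInt_derive (V := R_CompleteNormedModule) F); intros x _.
  - unfold F. auto_derive; auto. field. lra.
  - apply continuity_pt_filterlim, derivable_continuous_pt, ex_derive_Reals_0. auto_derive. auto.
Qed.

Lemma is_RInt_mul_exp c U : 0 < c ->
  is_RInt (fun u => u * exp (- c * u)) 0 U (1 / c ^ 2 - exp (- c * U) * (U / c + 1 / c ^ 2)).
Proof.
  intros Hc. set (F := fun u => - exp (- c * u) * (u / c + 1 / c ^ 2)).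
  replace (1 / c ^ 2 - exp (- c * U) * (U / c + 1 / c ^ 2)) with (minus (F U) (F 0)).
  2:{ unfold F, minus, plus, opp. simpl. rewrite Rmult_0_r, exp_0. field. lra. }
  apply (is_RInt_derive (V := R_CompleteNormedModule) F); intros x _.
  - unfold F. auto_derive; auto. field. lra.
  - apply continuity_pt_filterlim, derivable_continuous_pt, ex_derive_Reals_0. auto_derive. auto.
Qed.

Lemma is_RInt_one_minus_exp_mul_exp c L U : 0 < c -> 0 < L ->
  is_RInt (fun u => (1 - exp (- L * u)) / L * exp (- c * u)) 0 U
    (((1 - exp (- c * U)) / c - (1 - exp (- (c + L) * U)) / (c + L)) / L).
Proof.
  intros Hc HL. set (F := fun u => (- exp (- c * u) / c + exp (- (c + L) * u) / (c + L)) / L).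
  replace (((1 - exp (- c * U)) / c - (1 - exp (- (c + L) * U)) / (c + L)) / L)
    with (minus (F U) (F 0)).
  2:{ unfold F, minus, plus, opp. simpl. rewrite !Rmult_0_r, exp_0. field. lra. }
  apply (is_RInt_derive (V := R_CompleteNormedModule) F); intros x _.
  - unfold F. auto_derive; auto.
    replace (- (c + L) * x) with (- L * x + - c * x) by ring. rewrite exp_plus. field. lra.
  - apply continuity_pt_filterlim, derivable_continuous_pt, ex_derive_Reals_0. auto_derive. auto.
Qed.

(* The common bound [e^-cU (U/c + 1/c^2) <= laplace_tail U] (for [c >= ln 2]) on the
   parts over [[U, oo)] of the Laplace integrals of [u] and [(1 - 2^-u) / ln 2]. *)
Definition laplace_tail (U : R) : R := exp (- ln 2 * U) * (U / ln 2 + 1 / ln 2 ^ 2).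

Lemma one_plus_mul_exp_neg_le y : 0 <= y -> (1 + y) * exp (- y) <= 4 / (2 + y).
Proof.
  intros Hy.
  assert (E : exp y = exp (y / 2) * exp (y / 2)) by (rewrite <- exp_plus; f_equal; field).
  pose proof (exp_ineq1_le (y / 2)).
  assert ((1 + y / 2) * (1 + y / 2) <= exp y) by (rewrite E; apply Rmult_le_compat; lra).
  assert (Hm : exp (- y) * exp y = 1) by (rewrite <- exp_plus, Rplus_opp_l; apply exp_0).
  pose proof (exp_pos (- y)). pose proof (exp_pos y).
  apply Rmult_le_reg_r with ((2 + y) * exp y); [apply Rmult_lt_0_compat; lra|].
  replace (4 / (2 + y) * ((2 + y) * exp y)) with (4 * exp y) by (field; lra).
  replace ((1 + y) * exp (- y) * ((2 + y) * exp y)) with ((1 + y) * (2 + y) * (exp (- y) * exp y))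
    by ring.
  rewrite Hm. nra.
Qed.

Lemma laplace_tail_small K eps : 0 <= K -> 0 < eps ->
  exists U, 0 <= U /\ K * laplace_tail U <= eps.
Proof.
  intros HK He. set (L := ln 2). pose proof ln2_pos as HL. fold L in HL.
  assert (HL2 : 0 < L ^ 2) by (apply pow_lt; lra).
  set (y := 4 * (K + 1) / (L ^ 2 * eps)).
  assert (Hy : 0 < y) by (apply Rdiv_lt_0_compat; [lra|apply Rmult_lt_0_compat; lra]).
  exists (y / L). split; [apply Rdiv_le_0_compat; lra|].
  unfold laplace_tail. fold L.
  replace (exp (- L * (y / L)) * (y / L / L + 1 / L ^ 2)) with ((1 + y) * exp (- y) / L ^ 2)
    by (replace (- L * (y / L)) with (- y) by (field; lra); field; lra).
  pose proof (one_plus_mul_exp_neg_le y ltac:(lra)).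
  apply Rle_trans with ((K + 1) * (4 / y / L ^ 2)).
  - assert (0 <= (1 + y) * exp (- y) / L ^ 2) by (apply Rdiv_le_0_compat; [|lra];
      apply Rmult_le_pos; [lra|left; apply exp_pos]).
    assert ((1 + y) * exp (- y) / L ^ 2 <= 4 / y / L ^ 2).
    { unfold Rdiv. apply Rmult_le_compat_r; [left; apply Rinv_0_lt_compat; lra|].
      eapply Rle_trans; [apply H|]. unfold Rdiv.
      apply Rmult_le_compat_l; [lra|apply Rinv_le_contravar; lra]. }
    apply Rmult_le_compat; lra.
  - right. unfold y. field. repeat split; lra.
Qed.

Lemma inv_sq_le_laplace c U : ln 2 <= c -> 0 <= U ->
  1 / c ^ 2 <= RInt (fun u => u * exp (- c * u)) 0 U + laplace_tail U.
Proof.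
  intros Hc HU. pose proof ln2_pos.
  rewrite (is_RInt_unique _ _ _ _ (is_RInt_mul_exp c U ltac:(lra))).
  unfold laplace_tail.
  assert (exp (- c * U) <= exp (- ln 2 * U)) by (apply exp_le_compat; nra).
  assert (U / c <= U / ln 2)
    by (unfold Rdiv; apply Rmult_le_compat_l; [|apply Rinv_le_contravar]; lra).
  assert (1 / c ^ 2 <= 1 / ln 2 ^ 2).
  { unfold Rdiv. apply Rmult_le_compat_l; [lra|]. apply Rinv_le_contravar; [apply pow_lt|]; nra. }
  assert (0 <= U / c + 1 / c ^ 2)
    by (apply Rplus_le_le_0_compat; apply Rdiv_le_0_compat; try apply pow_lt; lra).
  pose proof (exp_pos (- c * U)).
  assert (exp (- c * U) * (U / c + 1 / c ^ 2) <= exp (- ln 2 * U) * (U / ln 2 + 1 / ln 2 ^ 2))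
    by (apply Rmult_le_compat; lra).
  lra.
Qed.

Lemma inv_mul_le_laplace c U : ln 2 <= c -> 0 <= U ->
  1 / (c * (c + ln 2))
    <= RInt (fun u => (1 - exp (- ln 2 * u)) / ln 2 * exp (- c * u)) 0 U + laplace_tail U.
Proof.
  intros Hc HU. set (L := ln 2) in *. pose proof ln2_pos as HL. fold L in HL.
  rewrite (is_RInt_unique _ _ _ _ (is_RInt_one_minus_exp_mul_exp c L U ltac:(lra) HL)).
  unfold laplace_tail. fold L.
  assert (E1 : exp (- c * U) <= exp (- L * U)) by (apply exp_le_compat; nra).
  pose proof (exp_pos (- (c + L) * U)). pose proof (exp_pos (- c * U)).
  assert (exp (- c * U) / c <= exp (- L * U) / L).
  { unfold Rdiv. apply Rmult_le_compat; try lra.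
    - left; apply Rinv_0_lt_compat; lra.
    - apply Rinv_le_contravar; lra. }
  assert (0 <= exp (- (c + L) * U) / (c + L)) by (apply Rdiv_le_0_compat; lra).
  replace (((1 - exp (- c * U)) / c - (1 - exp (- (c + L) * U)) / (c + L)) / L)
    with (1 / (c * (c + L)) - (exp (- c * U) / c - exp (- (c + L) * U) / (c + L)) / L)
    by (field; lra).
  assert ((exp (- c * U) / c - exp (- (c + L) * U) / (c + L)) / L <= exp (- L * U) / L / L).
  { unfold Rdiv at 1 3. apply Rmult_le_compat_r; [left; apply Rinv_0_lt_compat|]; lra. }
  assert (exp (- L * U) / L / L <= exp (- L * U) * (U / L + 1 / L ^ 2)).
  { replace (exp (- L * U) / L / L) with (exp (- L * U) * (1 / L ^ 2)) by (field; lra).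
    apply Rmult_le_compat_l; [left; apply exp_pos|].
    assert (0 <= U / L) by (apply Rdiv_le_0_compat; lra). lra. }
  lra.
Qed.

(** * Parts (ii) and (iii): summing under the integral *)

Lemma vonMangoldt_laplace_identity m N u (w : R) : (1 <= m)%nat ->
  sum_n (fun q => vonMangoldt q / INR q * (w * exp (- ln (INR m * INR q) * u))) N =
  w * exp (- ln (INR m) * u) * vonMangoldt_dirichlet N (1 + u).
Proof.
  intros Hm. unfold vonMangoldt_dirichlet. rewrite <- sum_n_Rmult_l. apply sum_n_ext_R. intros q.
  destruct (Nat.eq_dec q 0) as [->|Hq]; [rewrite vonMangoldt_0; unfold Rdiv; ring|].
  assert (0 < INR q) by (apply lt_0_INR; lia). pose proof (INR_ge_1 m Hm).
  unfold inv_rpow. rewrite ln_mult by lra.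
  replace (- (1 + u) * ln (INR q)) with (- ln (INR q) * u + - ln (INR q)) by ring.
  replace (- (ln (INR m) + ln (INR q)) * u) with (- ln (INR m) * u + - ln (INR q) * u) by ring.
  rewrite !exp_plus, exp_Ropp, exp_ln by lra. field. lra.
Qed.

Section VonMangoldtLaplace.

Variables (m : nat) (U : R) (w g : R -> R).
Hypothesis m_ge_1 : (1 <= m)%nat.
Hypothesis U_ge_0 : 0 <= U.
Hypothesis w_derivable : forall x, ex_derive w x.
Hypothesis g_integrable : ex_RInt g 0 U.
Hypothesis majorant_le_g : forall u, 0 < u < U ->
  0 <= w u /\ w u * exp (- ln (INR m) * u) * dirichlet_majorant u <= g u.

Lemma vonMangoldt_laplace_sum_le N :
  sum_n (fun q => vonMangoldt q / INR q *
                  RInt (fun u => w u * exp (- ln (INR m * INR q) * u)) 0 U) N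
    <= RInt g 0 U.
Proof.
  set (h := fun q u => vonMangoldt q / INR q * (w u * exp (- ln (INR m * INR q) * u))).
  assert (Hh : forall q, ex_RInt (fun u => w u * exp (- ln (INR m * INR q) * u)) 0 U).
  { intros q. apply ex_RInt_derivable. intros x. auto_derive. auto. }
  destruct (RInt_sum_n h 0 U N) as [Hex Hsum].
  { intros q _. apply ex_RInt_derivable. intros x. unfold h. auto_derive. auto. }
  apply Rle_trans with (RInt (fun u => sum_n (fun q => h q u) N) 0 U).
  { right. transitivity (sum_n (fun q => RInt (h q) 0 U) N); [|symmetry; exact Hsum].
    apply sum_n_ext_R. intros q. unfold h. rewrite RInt_scal_R; auto. }
  apply RInt_le; auto. intros u Hu. unfold h.
  rewrite (vonMangoldt_laplace_identity m N u (w u) m_ge_1).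
  destruct (majorant_le_g u Hu) as [Hw Hg].
  eapply Rle_trans; [|exact Hg]. apply Rmult_le_compat_l.
  - apply Rmult_le_pos; [auto|left; apply exp_pos].
  - apply vonMangoldt_dirichlet_le. lra.
Qed.

Lemma vonMangoldt_weighted_sum_le (k : R -> R) N :
  (forall c, ln 2 <= c -> k c <= RInt (fun u => w u * exp (- c * u)) 0 U + laplace_tail U) ->
  sum_n (fun q => vonMangoldt q / INR q * k (ln (INR m * INR q))) N
    <= RInt g 0 U + mertens N * laplace_tail U.
Proof.
  intros Hk. pose proof (vonMangoldt_laplace_sum_le N).
  unfold mertens. rewrite <- sum_n_Rmult_r.
  eapply Rle_trans; [|apply Rplus_le_compat_r; eassumption].
  rewrite <- sum_n_Rplus. apply sum_n_Rle. intros q _.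
  destruct (le_lt_dec q 1) as [Hq|Hq].
  { rewrite vonMangoldt_small by auto. unfold Rdiv. lra. }
  rewrite <- Rmult_plus_distr_l. apply Rmult_le_compat_l.
  - apply Rdiv_le_0_compat; [apply vonMangoldt_ge_0|apply lt_0_INR; lia].
  - apply Hk. pose proof (INR_ge_1 m m_ge_1). apply ln_le; [lra|].
    assert (2 <= INR q) by (apply (le_INR 2); lia). nra.
Qed.

End VonMangoldtLaplace.

Lemma mertens_ge_0 N : 0 <= mertens N.
Proof.
  apply sum_n_nonneg. intros q _. unfold Rdiv.
  apply Rmult_le_pos; [apply vonMangoldt_ge_0|apply Rinv_ge_0, pos_INR].
Qed.

Lemma vonMangoldt_ln_ln2_laplace_form m q : (1 <= m)%nat ->
  vonMangoldt q / (INR q * ln (INR m * INR q) * ln (2 * INR m * INR q))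
  = vonMangoldt q / INR q * (1 / (ln (INR m * INR q) * (ln (INR m * INR q) + ln 2))).
Proof.
  intros Hm. destruct (le_lt_dec q 1) as [Hq|Hq].
  { rewrite vonMangoldt_small by auto. unfold Rdiv. ring. }
  assert (2 <= INR q) by (apply (le_INR 2); lia).
  pose proof (ln_mul_pos m (INR q) Hm ltac:(lra)). pose proof ln2_pos. pose proof (INR_ge_1 m Hm).
  replace (2 * INR m * INR q) with (2 * (INR m * INR q)) by ring.
  rewrite (ln_mult 2) by nra. field. repeat split; lra.
Qed.

Lemma vonMangoldt_ln_ln2_ge_0 m q : (1 <= m)%nat ->
  0 <= vonMangoldt q / (INR q * ln (INR m * INR q) * ln (2 * INR m * INR q)).
Proof.
  intros Hm. unfold Rdiv. apply Rmult_le_pos; [apply vonMangoldt_ge_0|apply Rinv_ge_0].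
  destruct (Nat.eq_dec q 0) as [->|Hq]; [simpl; lra|].
  pose proof (INR_ge_1 m Hm). pose proof (INR_ge_1 q ltac:(lia)).
  apply Rmult_le_pos; [apply Rmult_le_pos|]; [lra| |]; apply ln_ge_0; nra.
Qed.

Lemma partial_sum_vonMangoldt_ln_ln2_le m N : (1 <= m)%nat ->
  sum_n (fun q => vonMangoldt q / (INR q * ln (INR m * INR q) * ln (2 * INR m * INR q))) N
    <= 1 / ln (2 * INR m).
Proof.
  intros Hm. set (L := ln 2). pose proof ln2_pos as HL. fold L in HL.
  set (lm := ln (INR m)). pose proof (INR_ge_1 m Hm).
  assert (Hlm : 0 <= lm) by (apply ln_ge_0; lra).
  replace (ln (2 * INR m)) with (lm + L) by (unfold lm, L; rewrite ln_mult; lra).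
  apply Rle_plus_epsilon. intros eps He.
  destruct (laplace_tail_small (mertens N) eps (mertens_ge_0 N) He) as [U [HU HUe]].
  set (w := fun u => (1 - exp (- L * u)) / L). set (g := fun u => exp (- (lm + L) * u)).
  assert (Hw : forall x, ex_derive w x) by (intros x; unfold w; auto_derive; auto).
  assert (Hg : ex_RInt g 0 U) by (apply ex_RInt_derivable; intros x; unfold g; auto_derive; auto).
  (* With [q = 2^-u], [(1 - q) / ln 2 * m^-u * (ln 2 * q / (1 - q)) = m^-u q] exactly. *)
  assert (Hmaj : forall u, 0 < u < U ->
            0 <= w u /\ w u * exp (- lm * u) * dirichlet_majorant u <= g u).
  { intros u Hu. pose proof (exp_neg_u_ln2_bounds u ltac:(lra)) as Hq. fold L in Hq.
    unfold w, g, dirichlet_majorant. fold L.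
    replace (- L * u) with (- u * L) by ring.
    replace (- (lm + L) * u) with (- lm * u + - u * L) by ring. rewrite exp_plus.
    split; [apply Rdiv_le_0_compat; lra|]. right. field. lra. }
  pose proof (vonMangoldt_weighted_sum_le m U w g Hm HU Hw Hg Hmaj
                (fun c => 1 / (c * (c + L))) N (fun c Hc => inv_mul_le_laplace c U Hc HU)).
  rewrite (sum_n_ext_R _ _ _ (fun q => vonMangoldt_ln_ln2_laplace_form m q Hm)).
  eapply Rle_trans; [eassumption|].
  unfold g. rewrite (is_RInt_unique _ _ _ _ (is_RInt_exp (lm + L) U ltac:(lra))).
  apply Rplus_le_compat; auto.
  unfold Rdiv. apply Rmult_le_compat_r; [left; apply Rinv_0_lt_compat; lra|].
  pose proof (exp_pos (- (lm + L) * U)). lra.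
Qed.

Theorem series_vonMangoldt_ln_ln2_le m : (1 <= m)%nat ->
  let f := fun q : nat =>
    vonMangoldt q / (INR q * ln (INR m * INR q) * ln (2 * INR m * INR q)) in
  ex_series f /\ Series f <= 1 / ln (2 * INR m).
Proof.
  intros Hm f. apply series_nonneg_bounded.
  - intros q. apply vonMangoldt_ln_ln2_ge_0, Hm.
  - intros N. apply partial_sum_vonMangoldt_ln_ln2_le, Hm.
Qed.

(* Telescoping: [x / (x + j + 1)^2 <= x (1 / (x + j + 1/2) - 1 / (x + j + 3/2))]. *)
Lemma series_x_div_sq x : 1 <= x ->
  ex_series (fun j : nat => x / (x + INR (S j)) ^ 2) /\
  Series (fun j : nat => x / (x + INR (S j)) ^ 2) <= x / (x + 1 / 2).
Proof.
  intros Hx. apply series_nonneg_bounded.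
  { intros n. apply Rdiv_le_0_compat; [lra|]. pose proof (pos_INR (S n)). nra. }
  intros n.
  assert (sum_n (fun j => x / (x + INR (S j)) ^ 2) n
            <= x * (1 / (x + 1 / 2) - 1 / (x + INR n + 3 / 2))).
  { induction n as [|n IH].
    - rewrite sum_O. simpl (INR 1). simpl (INR 0).
      replace (x * (1 / (x + 1 / 2) - 1 / (x + 0 + 3 / 2)))
        with (x / ((x + 1 / 2) * (x + 3 / 2))) by (field; lra).
      unfold Rdiv. apply Rmult_le_compat_l; [lra|]. apply Rinv_le_contravar; nra.
    - rewrite sum_n_Sn, !S_INR. pose proof (pos_INR n).
      replace (x * (1 / (x + 1 / 2) - 1 / (x + (INR n + 1) + 3 / 2)))
        with (x * (1 / (x + 1 / 2) - 1 / (x + INR n + 3 / 2))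
              + x / ((x + INR n + 3 / 2) * (x + INR n + 5 / 2))) by (field; lra).
      apply Rplus_le_compat; [exact IH|].
      unfold Rdiv. apply Rmult_le_compat_l; [lra|].
      apply Rinv_le_contravar; [apply Rmult_lt_0_compat; lra|simpl; nra]. }
  pose proof (pos_INR n).
  assert (0 <= x * (1 / (x + INR n + 3 / 2)))
    by (apply Rmult_le_pos; [lra|apply Rdiv_le_0_compat; lra]).
  lra.
Qed.

Lemma dirichlet_majorant_expand u n : 0 < u ->
  dirichlet_majorant u =
  ln 2 * sum_n (fun j => exp (- INR (S j) * ln 2 * u)) n
  + ln 2 * exp (- INR (S (S n)) * ln 2 * u) / (1 - exp (- u * ln 2)).
Proof.
  intros Hu. pose proof (exp_neg_u_ln2_bounds u Hu). unfold dirichlet_majorant.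
  assert (Hstep : forall k,
    exp (- INR (S k) * ln 2 * u) = exp (- INR k * ln 2 * u) * exp (- u * ln 2)).
  { intros k. rewrite <- exp_plus, S_INR. f_equal. ring. }
  induction n as [|n IH].
  - rewrite sum_O, !Hstep. simpl (INR 0). replace (- 0 * ln 2 * u) with 0 by ring.
    rewrite exp_0. field. lra.
  - rewrite IH, sum_n_Sn, (Hstep (S (S n))). field. lra.
Qed.

Lemma mul_dirichlet_majorant_le u n : 0 < u ->
  u * dirichlet_majorant u
    <= sum_n (fun j => ln 2 * (u * exp (- INR (S j) * ln 2 * u))) n
       + exp (- INR (S n) * ln 2 * u).
Proof.
  intros Hu. pose proof ln2_pos. pose proof (exp_neg_u_ln2_bounds u Hu).
  rewrite (dirichlet_majorant_expand u n Hu), Rmult_plus_distr_l.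
  apply Rplus_le_compat.
  - right. rewrite <- !sum_n_Rmult_l. apply sum_n_ext_R. intros j. ring.
  - set (q := exp (- u * ln 2)) in *.
    assert (E : exp (- INR (S (S n)) * ln 2 * u) = exp (- INR (S n) * ln 2 * u) * q).
    { unfold q. rewrite <- exp_plus, (S_INR (S n)). f_equal. ring. }
    assert (Hk : u * ln 2 * q <= 1 - q).
    { pose proof (exp_ineq1_le (u * ln 2)).
      assert (q * exp (u * ln 2) = 1).
      { unfold q. rewrite <- exp_plus.
        replace (- u * ln 2 + u * ln 2) with 0 by ring. apply exp_0. }
      nra. }
    rewrite E. pose proof (exp_pos (- INR (S n) * ln 2 * u)).
    replace (u * (ln 2 * (exp (- INR (S n) * ln 2 * u) * q) / (1 - q)))
      with (exp (- INR (S n) * ln 2 * u) * (u * ln 2 * q / (1 - q))) by (field; lra).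
    rewrite <- (Rmult_1_r (exp (- INR (S n) * ln 2 * u))) at 2.
    apply Rmult_le_compat_l; [lra|].
    apply Rmult_le_reg_r with (1 - q); [lra|].
    unfold Rdiv. rewrite Rmult_assoc, Rinv_l by lra. lra.
Qed.

Lemma mul_exp_dirichlet_majorant_le lm u n : 0 < u ->
  u * exp (- lm * u) * dirichlet_majorant u
    <= sum_n (fun j => ln 2 * (u * exp (- (lm + INR (S j) * ln 2) * u))) n
       + exp (- (lm + INR (S n) * ln 2) * u).
Proof.
  intros Hu. pose proof (mul_dirichlet_majorant_le u n Hu).
  assert (Hsplit : forall r, exp (- (lm + r * ln 2) * u) = exp (- lm * u) * exp (- r * ln 2 * u)).
  { intros r. rewrite <- exp_plus. f_equal. ring. }
  rewrite Hsplit, (sum_n_ext_R _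
    (fun j => exp (- lm * u) * (ln 2 * (u * exp (- INR (S j) * ln 2 * u)))))
    by (intros j; rewrite Hsplit; ring).
  rewrite sum_n_Rmult_l, <- Rmult_plus_distr_l, (Rmult_comm u), Rmult_assoc.
  apply Rmult_le_compat_l; [left; apply exp_pos|lra].
Qed.

Lemma RInt_exp_sum_le (b : R) (k : nat -> R) n U : 0 <= b -> 0 <= U -> (forall j, 0 < k j) ->
  let g := fun u => sum_n (fun j => b * (u * exp (- k j * u))) n + exp (- k n * u) in
  ex_RInt g 0 U /\ RInt g 0 U <= sum_n (fun j => b / k j ^ 2) n + 1 / k n.
Proof.
  intros Hb HU Hk g.
  set (h := fun j u => b * (u * exp (- k j * u))).
  destruct (RInt_sum_n h 0 U n) as [Hex Hsum].
  { intros j _. apply ex_RInt_derivable. intros x. unfold h. auto_derive. auto. }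
  assert (Hexp : ex_RInt (fun u => exp (- k n * u)) 0 U).
  { apply ex_RInt_derivable. intros x. auto_derive. auto. }
  split; [exact (ex_RInt_plus _ _ _ _ Hex Hexp)|].
  assert (E : RInt g 0 U = sum_n (fun j => RInt (h j) 0 U) n + RInt (fun u => exp (- k n * u)) 0 U).
  { transitivity (RInt (fun u => sum_n (fun j => h j u) n) 0 U
                  + RInt (fun u => exp (- k n * u)) 0 U).
    - exact (RInt_plus _ _ 0 U Hex Hexp).
    - f_equal. exact Hsum. }
  rewrite E, (is_RInt_unique _ _ _ _ (is_RInt_exp (k n) U (Hk n))).
  apply Rplus_le_compat.
  - apply sum_n_Rle. intros j _. unfold h.
    rewrite RInt_scal_R by (apply ex_RInt_derivable; intros x; auto_derive; auto).
    rewrite (is_RInt_unique _ _ _ _ (is_RInt_mul_exp (k j) U (Hk j))).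
    pose proof (exp_pos (- k j * U)). pose proof (Hk j).
    assert (0 <= U / k j + 1 / k j ^ 2)
      by (apply Rplus_le_le_0_compat; apply Rdiv_le_0_compat; try apply pow_lt; lra).
    assert (0 <= b * (exp (- k j * U) * (U / k j + 1 / k j ^ 2)))
      by (apply Rmult_le_pos; [|apply Rmult_le_pos]; lra).
    unfold Rdiv in *. nra.
  - pose proof (exp_pos (- k n * U)). pose proof (Hk n).
    unfold Rdiv. apply Rmult_le_compat_r; [left; apply Rinv_0_lt_compat|]; lra.
Qed.

Lemma term_eq_laplace_form m q : (1 <= m)%nat ->
  term m q = vonMangoldt q / INR q * (1 / ln (INR m * INR q) ^ 2).
Proof.
  intros Hm. unfold term. destruct (le_lt_dec q 1) as [Hq|Hq].
  { rewrite vonMangoldt_small by auto. unfold Rdiv. ring. }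
  pose proof (ln_mul_pos m (INR q) Hm ltac:(apply (le_INR 2); lia)).
  assert (0 < INR q) by (apply lt_0_INR; lia). field. lra.
Qed.

Section PowerOfTwo.

Variables (m : nat) (x : R).
Hypothesis m_ge_1 : (1 <= m)%nat.
Hypothesis x_ge_1 : 1 <= x.
Hypothesis m_eq : INR m = Rpower 2 x.

Let a j := x / (x + INR (S j)) ^ 2.

Lemma ln_m_eq : ln (INR m) = x * ln 2.
Proof. rewrite m_eq. unfold Rpower. apply ln_exp. Qed.

(* Each term is [x / (x + j + 1)^2] because [ln m = x ln 2]. *)
Lemma ln_mul_sum_shifted_inv_sq_le n :
  ln (INR m) * sum_n (fun j => ln 2 / (ln (INR m) + INR (S j) * ln 2) ^ 2) n <= Series a.
Proof.
  pose proof ln2_pos. destruct (series_x_div_sq x x_ge_1) as [Hexa _].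
  rewrite <- sum_n_Rmult_l, ln_m_eq.
  eapply Rle_trans; [|apply (sum_n_le_Series a n); auto].
  - right. apply sum_n_ext_R. intros j. unfold a.
    pose proof (pos_INR (S j)). field. split; nra.
  - intros j. unfold a. apply Rdiv_le_0_compat; [lra|]. pose proof (pos_INR (S j)). nra.
Qed.

Lemma ln_mul_partial_sum_term_le N : ln (INR m) * sum_n (term m) N <= Series a.
Proof.
  set (L := ln 2). set (lm := ln (INR m)). pose proof ln2_pos as HL. fold L in HL.
  assert (Hlm : lm = x * L) by apply ln_m_eq.
  assert (Hlm0 : 0 < lm) by (rewrite Hlm; nra).
  apply Rle_plus_epsilon. intros eps He.
  destruct (laplace_tail_small (lm * mertens N) (eps / 2)) as [U [HU HUe]].
  { apply Rmult_le_pos; [lra|apply mertens_ge_0]. }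
  { lra. }
  destruct (nat_floor_exists (2 * lm / (L * eps))) as [n [_ Hn]].
  { apply Rdiv_le_0_compat; nra. }
  set (k := fun j : nat => lm + INR (S j) * L).
  assert (Hk : forall j, 0 < k j) by (intros j; unfold k; pose proof (pos_INR (S j)); nra).
  destruct (RInt_exp_sum_le L k n U ltac:(lra) HU Hk) as [Hg HRg]. cbv zeta in Hg, HRg.
  set (g := fun u => sum_n (fun j => L * (u * exp (- k j * u))) n + exp (- k n * u)) in *.
  assert (Hmaj : forall u, 0 < u < U ->
            0 <= u /\ u * exp (- lm * u) * dirichlet_majorant u <= g u).
  { intros u Hu. split; [lra|]. apply mul_exp_dirichlet_majorant_le. lra. }
  pose proof (vonMangoldt_weighted_sum_le m U (fun u => u) g m_ge_1 HU
                ex_derive_id Hg Hmaj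
                (fun c => 1 / c ^ 2) N (fun c Hc => inv_sq_le_laplace c U Hc HU)) as Hsum.
  cbv beta in Hsum.
  rewrite <- (sum_n_ext_R (term m) _ N (fun q => term_eq_laplace_form m q m_ge_1)) in Hsum.
  pose proof (ln_mul_sum_shifted_inv_sq_le n) as Ha.
  change (lm * sum_n (fun j => L / k j ^ 2) n <= Series a) in Ha.
  assert (Hkn : lm * (1 / k n) <= eps / 2).
  { assert (2 * lm < eps * (INR (S n) * L)).
    { rewrite S_INR. apply Rmult_lt_compat_r with (r := L * eps) in Hn; [|nra].
      replace (2 * lm / (L * eps) * (L * eps)) with (2 * lm) in Hn by (field; lra). nra. }
    pose proof (Hk n). unfold k in *.
    apply Rmult_le_reg_r with (2 * (lm + INR (S n) * L)); [lra|].
    replace (lm * (1 / (lm + INR (S n) * L)) * (2 * (lm + INR (S n) * L))) with (2 * lm)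
      by (field; lra).
    nra. }
  apply Rmult_le_compat_l with (r := lm) in Hsum; [|lra].
  apply Rmult_le_compat_l with (r := lm) in HRg; [|lra].
  nra.
Qed.

Theorem ln_mul_series_term_le :
  ex_series (term m) /\ ex_series a /\ ln (INR m) * Series (term m) <= Series a /\
  Series a <= x / (x + 1 / 2) /\ x / (x + 1 / 2) <= 1.
Proof.
  pose proof ln2_pos.
  assert (Hlm : 0 < ln (INR m)) by (rewrite ln_m_eq; nra).
  destruct (series_x_div_sq x x_ge_1) as [Hexa Ha].
  destruct (series_nonneg_bounded (term m) (Series a / ln (INR m))) as [Hex Hb].
  { apply term_ge_0. }
  { intros N. apply Rmult_le_reg_l with (ln (INR m)); auto.
    replace (ln (INR m) * (Series a / ln (INR m))) with (Series a) by (field; lra).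
    apply ln_mul_partial_sum_term_le. }
  repeat split; auto.
  - apply Rmult_le_reg_r with (/ ln (INR m)); [apply Rinv_0_lt_compat; auto|].
    replace (ln (INR m) * Series (term m) * / ln (INR m)) with (Series (term m)) by (field; lra).
    exact Hb.
  - apply Rmult_le_reg_r with (x + 1 / 2); [lra|].
    unfold Rdiv. rewrite Rmult_assoc, Rinv_l by lra. lra.
Qed.

End PowerOfTwo.

Theorem lemma3p3 :
  (* (i) *)
  (exists C : R,
     (forall (m : nat) (y z : R), (1 <= m)%nat -> 2 <= y -> y <= z ->
        Rabs (sum_between (term m) y z
              - (1 / ln (INR m * y) - 1 / ln (INR m * z)))
        <= C / (ln (INR m * y)) ^ 2)
     /\
     (forall (m : nat) (y : R), (1 <= m)%nat -> 2 <= y ->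
        ex_series (from_y (term m) y) /\
        Rabs (Series (from_y (term m) y) - 1 / ln (INR m * y))
        <= C / (ln (INR m * y)) ^ 2))
  /\
  (* (ii) *)
  (forall (m : nat) (x : R), (1 <= m)%nat -> 1 <= x -> INR m = Rpower 2 x ->
     ex_series (term m) /\
     ex_series (fun j : nat => x / (x + INR (S j)) ^ 2) /\
     ln (INR m) * Series (term m)
       <= Series (fun j : nat => x / (x + INR (S j)) ^ 2) /\
     Series (fun j : nat => x / (x + INR (S j)) ^ 2) <= x / (x + 1 / 2) /\
     x / (x + 1 / 2) <= 1)
  /\
  (* (iii) *)
  (forall m : nat, (1 <= m)%nat ->
     let f := fun q : nat =>
       vonMangoldt q / (INR q * ln (INR m * INR q) * ln (2 * INR m * INR q)) in
     ex_series f /\ Series f <= 1 / ln (2 * INR m)).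
Proof.
  split; [|split].
  - exists 11. split.
    + exact sum_between_estimate.
    + exact tail_series_estimate.
  - exact ln_mul_series_term_le.
  - exact series_vonMangoldt_ln_ln2_le.
Qed.
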